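(* Let $N\ge2$, $T=\{x\in\mathbb{R}^N:1<|x|<2\}$, $2<p<2^*$ ($2^*=\frac{2N}{N-2}$ if $N\ge3$, $+\infty$ if $N=2$). For $\lambda>0$ let $u_\lambda=u_\lambda(r)$ be the unique positive solution in $H^1_{0,rad}(T)$ of $-\Delta u+\lambda u=u^{p-1}$ in $T$, $u=0$ on $\partial T$, with unique maximum point $\bar r_\lambda\in(1,2)$. Let $\lambda_n\to+\infty$, $u_n=u_{\lambda_n}$, $\bar r_n=\bar r_{\lambda_n}$, $\omega_n(r)=\lambda_n^{\frac{1}{2-p}}u_n(r/\sqrt{\lambda_n}+\bar r_n)$ for $r\in(\sqrt{\lambda_n}(1-\bar r_n),\sqrt{\lambda_n}(2-\bar r_n))$, and let $W$ be the unique positive solution with maximum at $0$ of $-W''+W=W^{p-1}$ in $\mathbb{R}$, $W(r)\to0$ as $|r|\to\infty$. Then, after passing to a subsequence, $$\int_{\sqrt{\lambda_n}(1-\bar r_n)}^{\sqrt{\lambda_n}(2-\bar r_n)}\omega_n^2\,r^k\,dr\to\int_{-\infty}^{+\infty}W^2r^k\,dr,\qquad k=0,1,\dots,N-1.$$ *)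

From Stdlib Require Import Reals Lra.
From Coquelicot Require Import Coquelicot.
Open Scope R_scope.

Definition subcritical (N : nat) (p : R) : Prop :=
  2 < p /\ ((3 <= N)%nat -> p < 2 * INR N / (INR N - 2)).

(* v is a positive radial solution in H^1_{0,rad}(T), T = {1<|x|<2} in R^N, of
   -Δv + λ v = v^(p-1), written in the radial variable r = |x|:
   -v'' - (N-1)/r v' + λ v = v^(p-1) on (1,2), v(1)=v(2)=0, v > 0 on (1,2). *)
Definition pos_radial_sol (N : nat) (p lam : R) (v : R -> R) : Prop :=
  (forall r, 1 <= r <= 2 ->
     filterlim v (within (fun x => 1 <= x <= 2) (locally r)) (locally (v r))) /\
  v 1 = 0 /\ v 2 = 0 /\
  (forall r, 1 < r < 2 -> 0 < v r) /\
  (forall r, 1 < r < 2 ->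
     is_derive v r (Derive v r) /\
     is_derive (Derive v) r (Derive_n v 2 r) /\
     - Derive_n v 2 r - (INR N - 1) / r * Derive v r + lam * v r
       = Rpower (v r) (p - 1)).

Definition unique_max_point (v : R -> R) (rb : R) : Prop :=
  1 < rb < 2 /\ forall r, 1 < r < 2 -> r <> rb -> v r < v rb.

Definition ground_state (p : R) (W : R -> R) : Prop :=
  (forall r, 0 < W r) /\
  (forall r, W r <= W 0) /\
  (forall r, is_derive W r (Derive W r) /\
             is_derive (Derive W) r (Derive_n W 2 r) /\
             - Derive_n W 2 r + W r = Rpower (W r) (p - 1)) /\
  is_lim W p_infty 0 /\ is_lim W m_infty 0.

Definition rescaled (p lam rb : R) (u : R -> R) (r : R) : R :=
  Rpower lam (1 / (2 - p)) * u (r / sqrt lam + rb).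

(* After rescaling, [w_n] solves [w'' = w - w^(p-1) - c_n w'] on an interval of length
   [sqrt lam_n] containing its maximum point [0], with [0 <= c_n <= (N-1)/sqrt lam_n] on the
   right and [c_n <= 0] on the left. Along each side the energy [w'^2/2 + Phi w], where
   [Phi s = s^p/p - s^2/2], is monotone; as [w] vanishes at the end points, the energy stays
   nonnegative, [w] decreases away from [0], and the time [w] needs to descend from its
   maximum [M_n] bounds the length of the interval unless [Phi M_n] is small. Hence
   [Phi M_n -> 0], i.e. [M_n -> W 0], and both end points go to infinity. Gronwall's lemma
   then gives [w_n -> W] locally uniformly, while once [w_n <= delta0] the energy forces
   [w_n' <= - w_n / 2], so [w_n] and [W] decay like [e^(-|r|/2)] uniformly in [n].
   Dominated convergence concludes, for the whole sequence and for every exponent [k]. *)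

From Stdlib Require Import Reals Lra Lia Classical.
From Coquelicot Require Import Coquelicot.
Open Scope R_scope.

(** * Calculus on the real line *)

Section RealCalculus.
Implicit Types (f g : R -> R) (x a b k : R).

(* Coquelicot's differentiation rules are phrased with the [plus], [mult] and [scal] of a
   normed module, which do not unify with [Rplus] and [Rmult]; hence these restatements. *)

Lemma is_derive_val f x a b : is_derive f x a -> a = b -> is_derive f x b.
Proof. now intros H <-. Qed.

Lemma is_derive_Rext f g x a : (forall t, f t = g t) -> is_derive f x a -> is_derive g x a.
Proof. intros; eapply is_derive_ext; eauto. Qed.

Lemma is_derive_Rplus f g x a b : is_derive f x a -> is_derive g x b ->
  is_derive (fun y => f y + g y) x (a + b).
Proof. exact (is_derive_plus f g x a b). Qed.

Lemma is_derive_Rminus f g x a b : is_derive f x a -> is_derive g x b ->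
  is_derive (fun y => f y - g y) x (a - b).
Proof. exact (is_derive_minus f g x a b). Qed.

Lemma is_derive_Ropp f x a : is_derive f x a -> is_derive (fun y => - f y) x (- a).
Proof. exact (is_derive_opp f x a). Qed.

Lemma is_derive_Rmult f g x a b : is_derive f x a -> is_derive g x b ->
  is_derive (fun y => f y * g y) x (a * g x + f x * b).
Proof. intros Hf Hg; exact (is_derive_mult f g x a b Hf Hg Rmult_comm). Qed.

Lemma is_derive_Rscal k f x a : is_derive f x a -> is_derive (fun y => k * f y) x (k * a).
Proof. exact (is_derive_scal f x k a). Qed.

Lemma is_derive_Rconst k x : is_derive (fun _ => k) x 0.
Proof. exact (is_derive_const k x). Qed.

Lemma is_derive_Rid x : is_derive (fun y => y) x 1.
Proof. exact (is_derive_id x). Qed.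

Lemma is_derive_Rcomp f g x a b : is_derive f (g x) a -> is_derive g x b ->
  is_derive (fun y => f (g y)) x (b * a).
Proof. exact (is_derive_comp f g x a b). Qed.

Lemma is_derive_linear k x : is_derive (fun y => k * y) x k.
Proof. apply (is_derive_val _ _ (k * 1)); [apply is_derive_Rscal, is_derive_Rid | ring]. Qed.

Lemma is_derive_exp_linear k x : is_derive (fun y => exp (k * y)) x (k * exp (k * x)).
Proof.
  apply (is_derive_Rcomp exp (fun y => k * y)); [apply is_derive_exp | apply is_derive_linear].
Qed.

Lemma is_derive_Rpower q x : 0 < x ->
  is_derive (fun y => Rpower y q) x (q * Rpower x (q - 1)).
Proof. intros; apply is_derive_Reals, derivable_pt_lim_power; auto. Qed.

Lemma is_derive_Rsqr f x a : is_derive f x a -> is_derive (fun y => f y ^ 2) x (2 * f x * a).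
Proof.
  intros H. apply is_derive_Rext with (f := fun y => f y * f y); [intros; simpl; ring|].
  eapply is_derive_val; [apply (is_derive_Rmult f f x a a H H) | ring].
Qed.

Lemma is_derive_continuous f x a : is_derive f x a -> continuous f x.
Proof. intros H. apply (ex_derive_continuous (K := R_AbsRing) (V := R_NormedModule)). now exists a. Qed.

Lemma continuous_Rmult f g x : continuous f x -> continuous g x ->
  continuous (fun y => f y * g y) x.
Proof. apply (continuous_mult (U := R_UniformSpace) (K := R_AbsRing)). Qed.

Lemma continuous_Rpow f x n : continuous f x -> continuous (fun y => f y ^ n) x.
Proof.
  intros Hf. induction n as [|n IH]; simpl.
  - apply (continuous_const (U := R_UniformSpace) (V := R_UniformSpace)).
  - now apply continuous_Rmult.
Qed.

Lemma continuous_Rcomp f g x : continuous f x -> continuous g (f x) ->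
  continuous (fun y => g (f y)) x.
Proof. apply (continuous_comp (U := R_UniformSpace) (V := R_UniformSpace) (W := R_UniformSpace)). Qed.

Lemma continuous_eps f x : continuous f x -> forall eps, 0 < eps ->
  exists d, 0 < d /\ forall y, Rabs (y - x) < d -> Rabs (f y - f x) < eps.
Proof.
  intros Hc eps He. apply filterlim_locally with (eps := mkposreal eps He) in Hc.
  destruct Hc as [d Hd]. exists d. split; [apply cond_pos | intros y Hy; apply (Hd y Hy)].
Qed.

Lemma deriv_nonpos_decr (f df : R -> R) x1 x2 : x1 <= x2 ->
  (forall x, x1 <= x <= x2 -> is_derive f x (df x)) ->
  (forall x, x1 <= x <= x2 -> df x <= 0) -> f x2 <= f x1.
Proof.
  intros H12 Hd Hn.
  destruct (MVT_gen f x1 x2 df) as [c [Hc Heq]];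
    rewrite ?Rmin_left, ?Rmax_right in * by lra.
  - intros x Hx; apply Hd; lra.
  - intros x Hx. apply continuity_pt_filterlim, (is_derive_continuous f x (df x)), Hd; lra.
  - specialize (Hn c Hc). nra.
Qed.

Lemma deriv_nonneg_incr (f df : R -> R) x1 x2 : x1 <= x2 ->
  (forall x, x1 <= x <= x2 -> is_derive f x (df x)) ->
  (forall x, x1 <= x <= x2 -> 0 <= df x) -> f x1 <= f x2.
Proof.
  intros H12 Hd Hn.
  enough (- f x2 <= - f x1) by lra.
  apply (deriv_nonpos_decr (fun y => - f y) (fun y => - df y) x1 x2 H12).
  - intros; apply is_derive_Ropp; auto.
  - intros x Hx; specialize (Hn x Hx); lra.
Qed.

Lemma deriv_le_increment (f df : R -> R) x1 x2 K : x1 <= x2 ->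
  (forall x, x1 <= x <= x2 -> is_derive f x (df x)) ->
  (forall x, x1 <= x <= x2 -> df x <= K) -> f x2 - f x1 <= K * (x2 - x1).
Proof.
  intros H12 Hd Hn.
  enough (f x2 - K * x2 <= f x1 - K * x1) by lra.
  apply (deriv_nonpos_decr (fun y => f y - K * y) (fun y => df y - K) x1 x2 H12).
  - intros x Hx. apply is_derive_Rminus; [auto | apply is_derive_linear].
  - intros x Hx; specialize (Hn x Hx); lra.
Qed.

Lemma deriv_zero_const f : (forall x, is_derive f x 0) -> forall x y, f x = f y.
Proof.
  intros Hd.
  assert (Hle : forall x y, x <= y -> f x = f y).
  { intros x y Hxy. apply Rle_antisym.
    - apply (deriv_nonneg_incr f (fun _ => 0)); auto; intros; lra.
    - apply (deriv_nonpos_decr f (fun _ => 0)); auto; intros; lra. }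
  intros x y. destruct (Rle_or_lt x y); [auto | symmetry; apply Hle; lra].
Qed.

Lemma deriv_pos_strict_incr f x l : is_derive f x l -> 0 < l ->
  exists d, 0 < d /\ forall h, 0 < h < d -> f x < f (x + h) /\ f (x - h) < f x.
Proof.
  intros Hd Hl. apply is_derive_Reals in Hd.
  destruct (Hd (l / 2) ltac:(lra)) as [del Hdel].
  exists del. split; [apply cond_pos|]. intros h Hh. split.
  - assert (H1 := Hdel h ltac:(lra) ltac:(rewrite Rabs_pos_eq; lra)).
    apply Rabs_def2 in H1.
    assert (0 < (f (x + h) - f x) / h) by lra.
    assert (f (x + h) - f x = ((f (x + h) - f x) / h) * h) by (field; lra).
    nra.
  - assert (H1 := Hdel (- h) ltac:(lra) ltac:(rewrite Rabs_Ropp, Rabs_pos_eq; lra)).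
    apply Rabs_def2 in H1.
    assert (0 < (f (x + - h) - f x) / - h) by lra.
    assert (f (x + - h) - f x = ((f (x + - h) - f x) / - h) * - h) by (field; lra).
    replace (x - h) with (x + - h) by ring. nra.
Qed.

Lemma deriv_neg_strict_decr f x l : is_derive f x l -> l < 0 ->
  exists d, 0 < d /\ forall h, 0 < h < d -> f (x + h) < f x /\ f x < f (x - h).
Proof.
  intros Hd Hl.
  destruct (deriv_pos_strict_incr (fun y => - f y) x (- l) (is_derive_Ropp _ _ _ Hd))
    as [d [Hd0 H]]; [lra|].
  exists d; split; auto. intros h Hh; specialize (H h Hh); lra.
Qed.

Lemma deriv_local_max f x l d : is_derive f x l -> 0 < d ->
  (forall y, x - d < y < x + d -> f y <= f x) -> l = 0.
Proof.
  intros Hd Hd0 Hm.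
  assert (Hmin : forall e, 0 < e -> 0 < Rmin e d / 2 < e /\ Rmin e d / 2 < d).
  { intros e He. assert (Rmin e d <= e) by apply Rmin_l. assert (Rmin e d <= d) by apply Rmin_r.
    assert (0 < Rmin e d) by (apply Rmin_glb_lt; lra). lra. }
  destruct (Rtotal_order l 0) as [Hl|[Hl|Hl]]; auto.
  - destruct (deriv_neg_strict_decr f x l Hd Hl) as [e [He H]].
    destruct (Hmin e He). destruct (H (Rmin e d / 2)) as [_ H5]; [lra|].
    specialize (Hm (x - Rmin e d / 2) ltac:(lra)). lra.
  - destruct (deriv_pos_strict_incr f x l Hd Hl) as [e [He H]].
    destruct (Hmin e He). destruct (H (Rmin e d / 2)) as [H5 _]; [lra|].
    specialize (Hm (x + Rmin e d / 2) ltac:(lra)). lra.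
Qed.

End RealCalculus.

(** * The potential [Phi] *)

Definition Phi (p s : R) := - s ^ 2 / 2 + Rpower s p / p.
Definition PhiQ (p s : R) := Rpower s (p - 2) / p - 1 / 2.

Lemma Rpower_gt0 x y : 0 < Rpower x y.
Proof. apply exp_pos. Qed.

Lemma Rpower_1_base y : Rpower 1 y = 1.
Proof. unfold Rpower; rewrite ln_1, Rmult_0_r, exp_0; auto. Qed.

Lemma Rpower_pm1 p s : 0 < s -> Rpower s (p - 1) = s * Rpower s (p - 2).
Proof.
  intros Hs. replace (p - 1) with (1 + (p - 2)) by ring.
  rewrite Rpower_plus, Rpower_1; auto.
Qed.

Lemma Phi_PhiQ p s : 0 < s -> Phi p s = s ^ 2 * PhiQ p s.
Proof.
  intros Hs. unfold Phi, PhiQ.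
  replace p with (2 + (p - 2)) at 1 by ring.
  rewrite Rpower_plus, <- (Rpower_pow 2 s Hs). simpl INR.
  replace (1 + 1) with 2 by ring.
  destruct (Req_dec p 0) as [->|Hp]; [unfold Rdiv; rewrite Rinv_0; ring | field; auto].
Qed.

Lemma PhiQ_lt p s t : 2 < p -> 0 < s < t -> PhiQ p s < PhiQ p t.
Proof.
  intros Hp Hst. unfold PhiQ.
  assert (Rpower s (p - 2) < Rpower t (p - 2)) by (apply Rlt_Rpower_l; lra).
  assert (0 < / p) by (apply Rinv_0_lt_compat; lra).
  unfold Rdiv. nra.
Qed.

Lemma PhiQ_le p s t : 2 < p -> 0 < s <= t -> PhiQ p s <= PhiQ p t.
Proof.
  intros Hp Hst. destruct (Req_dec s t) as [->|]; [lra | left; apply PhiQ_lt; lra].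
Qed.

Lemma PhiQ_1_neg p : 2 < p -> PhiQ p 1 < 0.
Proof.
  intros Hp. unfold PhiQ. rewrite Rpower_1_base.
  enough (1 / p < 1 / 2) by lra.
  apply Rmult_lt_reg_r with (2 * p); [lra | field_simplify; lra].
Qed.

Lemma Phi_ge p s : 2 < p -> 0 < s -> - s ^ 2 / 2 <= Phi p s.
Proof.
  intros Hp Hs. unfold Phi.
  assert (0 < Rpower s p / p) by (apply Rdiv_lt_0_compat; [apply Rpower_gt0 | lra]). lra.
Qed.

Lemma is_derive_Phi p s : 2 < p -> 0 < s -> is_derive (Phi p) s (- s + Rpower s (p - 1)).
Proof.
  intros Hp Hs. unfold Phi.
  apply is_derive_Rext with (f := fun y => (- / 2) * (y ^ 2) + / p * Rpower y p);
    [intros; field; lra|].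
  eapply is_derive_val.
  - apply is_derive_Rplus; apply is_derive_Rscal;
      [apply is_derive_Rsqr, is_derive_Rid | apply is_derive_Rpower; auto].
  - cbv beta. field. lra.
Qed.

Section PositiveZero.
Variables (p W0 : R).
Hypothesis Hp : 2 < p.
Hypothesis HW0 : 0 < W0.
Hypothesis HPW0 : Phi p W0 = 0.

Lemma PhiQ_zero : PhiQ p W0 = 0.
Proof.
  rewrite Phi_PhiQ in HPW0; auto. assert (0 < W0 ^ 2) by (apply pow_lt; auto). nra.
Qed.

Lemma Rpower_zero_of_Phi : Rpower W0 (p - 2) = p / 2.
Proof.
  assert (H := PhiQ_zero). unfold PhiQ in H.
  apply (f_equal (fun z => 2 * p * z)) in H. field_simplify in H; lra.
Qed.

Lemma zero_of_Phi_gt1 : 1 < W0.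
Proof.
  destruct (Rlt_or_le 1 W0) as [|H]; auto. exfalso.
  assert (PhiQ p W0 <= PhiQ p 1) by (apply PhiQ_le; lra).
  assert (H1 := PhiQ_1_neg p Hp). rewrite PhiQ_zero in *. lra.
Qed.

Lemma PhiQ_nonneg s : W0 <= s -> 0 <= PhiQ p s.
Proof. intros; rewrite <- PhiQ_zero; apply PhiQ_le; lra. Qed.

Lemma Phi_nonneg_ge s : 0 < s -> 0 <= Phi p s -> W0 <= s.
Proof.
  intros Hs H. destruct (Rlt_or_le s W0) as [Hl|]; auto. exfalso.
  assert (PhiQ p s < PhiQ p W0) by (apply PhiQ_lt; lra). rewrite PhiQ_zero in *.
  rewrite Phi_PhiQ in H; auto. assert (0 < s ^ 2) by (apply pow_lt; auto). nra.
Qed.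

Lemma Phi_pos s : W0 < s -> 0 < Phi p s.
Proof.
  intros H. rewrite Phi_PhiQ by lra.
  assert (PhiQ p W0 < PhiQ p s) by (apply PhiQ_lt; lra). rewrite PhiQ_zero in *.
  assert (0 < s ^ 2) by (apply pow_lt; lra). nra.
Qed.

Lemma Phi_le s t : W0 <= s <= t -> Phi p s <= Phi p t.
Proof.
  intros H. rewrite !Phi_PhiQ by lra.
  assert (PhiQ p s <= PhiQ p t) by (apply PhiQ_le; lra).
  assert (0 <= PhiQ p s) by (apply PhiQ_nonneg; lra).
  assert (s ^ 2 <= t ^ 2) by (apply pow_incr; lra).
  assert (0 <= s ^ 2) by apply pow2_ge_0. nra.
Qed.

Lemma ode_rhs_le s : W0 <= s -> s - Rpower s (p - 1) <= s * (1 - p / 2).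
Proof.
  intros H. rewrite Rpower_pm1 by lra.
  assert (Rpower W0 (p - 2) <= Rpower s (p - 2)) by (apply Rle_Rpower_l; lra).
  rewrite Rpower_zero_of_Phi in *. nra.
Qed.

Lemma Phi_chord s M : 0 < s <= M -> 0 <= Phi p M ->
  (M - s) * (Phi p M / M) <= Phi p M - Phi p s.
Proof.
  intros Hs HM. rewrite !Phi_PhiQ by lra.
  assert (W0 <= M) by (apply Phi_nonneg_ge; lra).
  assert (0 <= PhiQ p M) by (apply PhiQ_nonneg; lra).
  replace ((M - s) * (M ^ 2 * PhiQ p M / M)) with ((M - s) * M * PhiQ p M) by (field; lra).
  destruct (Rle_or_lt (PhiQ p s) 0).
  - assert (0 <= s ^ 2) by apply pow2_ge_0.
    assert (0 <= s * M * PhiQ p M) by (apply Rmult_le_pos; nra). nra.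
  - assert (PhiQ p s <= PhiQ p M) by (apply PhiQ_le; lra).
    assert (s * PhiQ p s <= M * PhiQ p M) by nra. nra.
Qed.

End PositiveZero.

Definition delta0 (p : R) := Rpower (1 / 2) (1 / (p - 2)).

Lemma delta0_pos p : 0 < delta0 p.
Proof. apply Rpower_gt0. Qed.

Lemma Phi_small p s : 2 < p -> 0 < s <= delta0 p -> s ^ 2 / 4 <= - 2 * Phi p s.
Proof.
  intros Hp Hs. rewrite Phi_PhiQ by lra. unfold PhiQ.
  assert (Hsd : Rpower s (p - 2) <= Rpower (delta0 p) (p - 2)) by (apply Rle_Rpower_l; lra).
  unfold delta0 in Hsd. rewrite Rpower_mult in Hsd.
  replace (1 / (p - 2) * (p - 2)) with 1 in Hsd by (field; lra). rewrite Rpower_1 in Hsd by lra.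
  assert (0 < s ^ 2) by (apply pow_lt; lra).
  assert (Rpower s (p - 2) / p <= 1 / 4).
  { apply Rmult_le_reg_r with p; [lra|]. field_simplify; lra. }
  nra.
Qed.

(** * Half solutions and their energy *)

(* One side of a rescaled solution, read from its maximum point [0] towards the
   boundary point [b] where it vanishes: [v1] and [v2] play the roles of [v'] and
   [v''], and [c] is the first-order coefficient [(N-1)/r] after rescaling. *)
#[local] Set Implicit Arguments.
Record half_solution (p : R) (v v1 v2 c : R -> R) (b M : R) : Prop := {
  hs_len : 0 < b;
  hs_init : v 0 = M;
  hs_init' : v1 0 = 0;
  hs_deriv : forall r, 0 <= r < b -> is_derive v r (v1 r);
  hs_deriv' : forall r, 0 <= r < b -> is_derive v1 r (v2 r);
  hs_pos : forall r, 0 <= r < b -> 0 < v r;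
  hs_ode : forall r, 0 <= r < b -> v2 r = v r - Rpower (v r) (p - 1) - c r * v1 r;
  hs_lt_max : forall r, 0 < r < b -> v r < M;
  hs_vanish : forall g, 0 < g -> exists d, 0 < d /\ forall r, b - d < r < b -> v r < g }.
#[local] Unset Implicit Arguments.

(* The first integral of [- v'' + v = v^(p-1)]. *)
Definition energy (p : R) (v v1 : R -> R) (r : R) := v1 r ^ 2 / 2 + Phi p (v r).

Section HalfSolution.
Variables (p : R) (v v1 v2 c : R -> R) (b M : R).
Hypothesis Hp : 2 < p.
Hypothesis H : half_solution p v v1 v2 c b M.

Notation E := (energy p v v1).

Lemma hs_le_max r : 0 <= r < b -> v r <= M.
Proof.
  intros Hr. destruct (Req_dec r 0) as [->|].
  - rewrite (hs_init H); lra.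
  - left; apply (hs_lt_max H); lra.
Qed.

Lemma hs_max_pos : 0 < M.
Proof. rewrite <- (hs_init H). apply (hs_pos H). split; [lra | apply (hs_len H)]. Qed.

Lemma hs_sq_le_max r : 0 <= r < b -> v r ^ 2 <= M ^ 2.
Proof.
  intros Hr. apply pow_incr. split; [left; apply (hs_pos H) | apply hs_le_max]; auto.
Qed.

Lemma hs_small_near_end r g : 0 <= r < b -> 0 < g -> exists t, r <= t < b /\ v t < g.
Proof.
  intros Hr Hg. destruct (hs_vanish H Hg) as [d [Hd Hv]].
  exists (Rmax r (b - d / 2)).
  assert (r <= Rmax r (b - d / 2)) by apply Rmax_l.
  assert (b - d / 2 <= Rmax r (b - d / 2)) by apply Rmax_r.
  assert (Rmax r (b - d / 2) < b) by (apply Rmax_lub_lt; lra).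
  split; [lra | apply Hv; lra].
Qed.

Lemma energy_0 : E 0 = Phi p M.
Proof. unfold energy. rewrite (hs_init H), (hs_init' H). field. Qed.

Lemma is_derive_energy r : 0 <= r < b -> is_derive E r (- c r * v1 r ^ 2).
Proof.
  intros Hr. unfold energy.
  eapply is_derive_val.
  - apply is_derive_Rplus.
    + apply is_derive_Rext with (f := fun y => / 2 * (v1 y ^ 2)); [intros; field|].
      apply is_derive_Rscal, is_derive_Rsqr, (hs_deriv' H); auto.
    + apply is_derive_Rcomp; [apply is_derive_Phi; auto; apply (hs_pos H) |]; auto.
      apply (hs_deriv H); auto.
  - rewrite (hs_ode H) by auto. field.
Qed.

Lemma deriv_sq_le_energy r : 0 <= r < b -> v1 r ^ 2 <= 2 * E r + v r ^ 2.
Proof.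
  intros Hr. assert (- v r ^ 2 / 2 <= Phi p (v r)) by (apply Phi_ge, (hs_pos H); auto).
  unfold energy. lra.
Qed.

Section Damped.
Hypothesis Hc : forall r, 0 <= r < b -> 0 <= c r.

Lemma energy_decr r1 r2 : 0 <= r1 <= r2 -> r2 < b -> E r2 <= E r1.
Proof.
  intros H12 H2.
  apply (deriv_nonpos_decr E (fun r => - c r * v1 r ^ 2) r1 r2); [lra | |].
  - intros x Hx; apply is_derive_energy; lra.
  - intros x Hx. assert (0 <= c x) by (apply Hc; lra).
    assert (0 <= v1 x ^ 2) by apply pow2_ge_0. nra.
Qed.

Lemma energy_nonneg r : 0 <= r < b -> 0 <= E r.
Proof.
  intros Hr. destruct (Rle_or_lt 0 (E r)) as [|Hneg]; auto. exfalso.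
  set (g := sqrt (- E r)).
  assert (Hg : 0 < g) by (apply sqrt_lt_R0; lra).
  assert (Hg2 : g * g = - E r) by (apply sqrt_sqrt; lra).
  destruct (hs_small_near_end r g Hr Hg) as [t [Ht Hvt]].
  assert (E t <= E r) by (apply energy_decr; lra).
  assert (0 < v t) by (apply (hs_pos H); lra).
  assert (- v t ^ 2 / 2 <= Phi p (v t)) by (apply Phi_ge; auto).
  assert (Phi p (v t) <= E t) by (unfold energy; assert (0 <= v1 t ^ 2) by apply pow2_ge_0; lra).
  assert (v t ^ 2 < g * g) by nra.
  lra.
Qed.

Lemma energy_lower beta : (forall r, 0 <= r < b -> c r <= beta) ->
  (forall r, 0 < r < b -> v1 r < 0) ->
  forall r, 0 <= r < b -> E 0 - beta * sqrt (2 * E 0 + M ^ 2) * (M - v r) <= E r.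
Proof.
  intros Hcb Hneg r Hr.
  set (K := sqrt (2 * E 0 + M ^ 2)).
  assert (Hnp : forall x, 0 <= x < b -> v1 x <= 0).
  { intros x Hx. destruct (Req_dec x 0) as [->|].
    - rewrite (hs_init' H); lra.
    - left; apply Hneg; lra. }
  assert (HK : forall x, 0 <= x < b -> - v1 x <= K).
  { intros x Hx. unfold K. rewrite <- (sqrt_pow2 (- v1 x)) by (specialize (Hnp x Hx); lra).
    apply sqrt_le_1_alt.
    assert (v1 x ^ 2 <= 2 * E x + v x ^ 2) by (apply deriv_sq_le_energy; auto).
    assert (E x <= E 0) by (apply energy_decr; lra).
    assert (v x ^ 2 <= M ^ 2) by (apply hs_sq_le_max; auto).
    replace ((- v1 x) ^ 2) with (v1 x ^ 2) by ring. lra. }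
  assert (Hm : E 0 - beta * K * v 0 <= E r - beta * K * v r).
  { apply (deriv_nonneg_incr (fun y => E y - beta * K * v y)
      (fun y => - c y * v1 y ^ 2 - beta * K * v1 y) 0 r); [lra | |].
    - intros x Hx. apply is_derive_Rminus; [apply is_derive_energy; lra|].
      apply is_derive_Rscal, (hs_deriv H); lra.
    - intros x Hx. assert (Hx' : 0 <= x < b) by lra.
      specialize (Hc x Hx'). specialize (Hcb x Hx'). specialize (HK x Hx'). specialize (Hnp x Hx').
      assert (beta * (- v1 x) * (- v1 x) <= beta * K * (- v1 x)).
      { apply Rmult_le_compat_r; [lra|]. apply Rmult_le_compat_l; lra. }
      assert (c x * (v1 x * v1 x) <= beta * (v1 x * v1 x)) by (apply Rmult_le_compat_r; nra).
      simpl. nra. }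
  rewrite (hs_init H) in Hm. fold K. nra.
Qed.

End Damped.

Section AntiDamped.
Hypothesis Hc : forall r, 0 <= r < b -> c r <= 0.

Lemma energy_incr r : 0 <= r < b -> E 0 <= E r.
Proof.
  intros Hr.
  apply (deriv_nonneg_incr E (fun r => - c r * v1 r ^ 2) 0 r); [lra | |].
  - intros x Hx; apply is_derive_energy; lra.
  - intros x Hx. assert (c x <= 0) by (apply Hc; lra).
    assert (0 <= v1 x ^ 2) by apply pow2_ge_0. nra.
Qed.

Lemma energy_upper beta : 0 <= beta -> (forall r, 0 <= r < b -> - beta <= c r) ->
  forall r, 0 <= r < b -> 2 * E r + M ^ 2 <= (2 * E 0 + M ^ 2) * exp (2 * beta * r).
Proof.
  intros Hb0 Hcb r Hr.
  set (k := 2 * beta).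
  assert (Hm : (2 * E r + M ^ 2) * exp (- k * r) <= (2 * E 0 + M ^ 2) * exp (- k * 0)).
  { apply (deriv_nonpos_decr (fun y => (2 * E y + M ^ 2) * exp (- k * y))
      (fun y => (2 * (- c y * v1 y ^ 2) + 0) * exp (- k * y)
                + (2 * E y + M ^ 2) * (- k * exp (- k * y))) 0 r); [lra | |].
    - intros x Hx.
      apply (is_derive_Rmult (fun y => 2 * E y + M ^ 2) (fun y => exp (- k * y)));
        [|apply is_derive_exp_linear].
      apply is_derive_Rplus; [|apply is_derive_Rconst].
      apply is_derive_Rscal, is_derive_energy; lra.
    - intros x Hx. assert (Hx' : 0 <= x < b) by lra.
      assert (Hq := deriv_sq_le_energy x Hx').
      assert (v x ^ 2 <= M ^ 2) by (apply hs_sq_le_max; auto).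
      specialize (Hcb x Hx'). specialize (Hc x Hx').
      assert (0 < exp (- k * x)) by apply exp_pos.
      assert (- c x * v1 x ^ 2 <= beta * (2 * E x + M ^ 2)).
      { assert (0 <= v1 x ^ 2) by apply pow2_ge_0. nra. }
      assert (2 * (- c x * v1 x ^ 2) + 0 - k * (2 * E x + M ^ 2) <= 0) by (unfold k; lra).
      nra. }
  rewrite Rmult_0_r, exp_0, Rmult_1_r in Hm.
  assert (Hex : exp (- k * r) * exp (2 * beta * r) = 1).
  { rewrite <- exp_plus. unfold k. replace (- (2 * beta) * r + 2 * beta * r) with 0 by ring.
    apply exp_0. }
  assert (0 < exp (2 * beta * r)) by apply exp_pos.
  apply Rmult_le_compat_r with (r := exp (2 * beta * r)) in Hm; [|lra].
  rewrite Rmult_assoc, Hex, Rmult_1_r in Hm. exact Hm.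
Qed.

End AntiDamped.

Section Monotone.
Variable W0 : R.
Hypothesis HW0 : 0 < W0.
Hypothesis HPW0 : Phi p W0 = 0.
Hypothesis HE : forall r, 0 <= r < b -> 0 <= E r.

Lemma hs_crit_concave s : 0 <= s < b -> v1 s = 0 -> v2 s < 0.
Proof.
  intros Hs H1. assert (HEs := HE s Hs). unfold energy in HEs.
  rewrite H1 in HEs. replace (0 ^ 2 / 2) with 0 in HEs by (simpl; field).
  assert (Hv := hs_pos H Hs).
  assert (HvW0 : W0 <= v s) by (apply (Phi_nonneg_ge p W0); auto; lra).
  rewrite (hs_ode H), H1 by auto.
  assert (F := ode_rhs_le p W0 Hp HW0 HPW0 (v s) HvW0).
  assert (0 < v s * (p / 2 - 1)) by (apply Rmult_lt_0_compat; lra).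
  lra.
Qed.

Lemma hs_deriv_pos_left s e : 0 < s < b -> 0 <= v1 s -> 0 < e ->
  exists y, 0 < y < s /\ s - e < y /\ 0 < v1 y.
Proof.
  intros Hs H1 He.
  assert (Hsb : 0 <= s < b) by lra.
  assert (Hpick : forall d, 0 < d -> let y := s - Rmin (Rmin e d) s / 2 in
                   0 < y < s /\ s - e < y /\ s - d < y).
  { intros d Hd y. assert (Rmin (Rmin e d) s <= s) by apply Rmin_r.
    assert (Rmin (Rmin e d) s <= Rmin e d) by apply Rmin_l.
    assert (Rmin e d <= e) by apply Rmin_l. assert (Rmin e d <= d) by apply Rmin_r.
    assert (0 < Rmin (Rmin e d) s) by (repeat apply Rmin_glb_lt; lra).
    unfold y. lra. }
  destruct (Req_dec (v1 s) 0) as [Hz|Hnz].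
  - destruct (deriv_neg_strict_decr v1 s (v2 s) (hs_deriv' H Hsb) (hs_crit_concave s Hsb Hz))
      as [d [Hd Hloc]].
    destruct (Hpick d Hd) as [Hy1 [Hy2 Hy3]].
    eexists; split; [exact Hy1 | split; [exact Hy2|]].
    destruct (Hloc (Rmin (Rmin e d) s / 2)) as [_ Hlt]; [lra|]. lra.
  - destruct (continuous_eps v1 s (is_derive_continuous _ _ _ (hs_deriv' H Hsb)) (v1 s))
      as [d [Hd Hcont]]; [lra|].
    destruct (Hpick d Hd) as [Hy1 [Hy2 Hy3]].
    eexists; split; [exact Hy1 | split; [exact Hy2|]].
    assert (Hc := Hcont (s - Rmin (Rmin e d) s / 2) ltac:(rewrite Rabs_left; lra)).
    apply Rabs_def2 in Hc. lra.
Qed.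

(* A first point of [(0, r]] where [v1] stops being negative cannot exist:
   [hs_deriv_pos_left] yields points just before it where [v1 > 0]. *)
Lemma hs_deriv_neg r : 0 < r < b -> v1 r < 0.
Proof.
  intros Hs. destruct (Rlt_or_le (v1 r) 0) as [|Hs1]; auto. exfalso.
  assert (Hb := hs_len H).
  destruct (deriv_neg_strict_decr v1 0 (v2 0) (hs_deriv' H (r := 0) ltac:(lra))
              (hs_crit_concave 0 ltac:(lra) (hs_init' H))) as [d0 [Hd0 Hloc]].
  set (t0 := Rmin (d0 / 2) (r / 2)).
  assert (t0 <= d0 / 2) by apply Rmin_l. assert (t0 <= r / 2) by apply Rmin_r.
  assert (0 < t0) by (apply Rmin_glb_lt; lra).
  assert (Hneg0 : forall y, 0 < y <= t0 -> v1 y < 0).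
  { intros y Hy. destruct (Hloc y ltac:(lra)) as [Hlt _].
    rewrite Rplus_0_l, (hs_init' H) in Hlt. auto. }
  set (S := fun x => 0 < x <= r /\ forall y, 0 < y <= x -> v1 y < 0).
  destruct (completeness S) as [gl [Hub Hlub]].
  { exists r. intros x [Hx _]. lra. }
  { exists t0. split; [lra | exact Hneg0]. }
  assert (Hg1 : t0 <= gl) by (apply Hub; split; [lra | exact Hneg0]).
  assert (Hg2 : gl <= r) by (apply Hlub; intros x [Hx _]; lra).
  assert (Hbelow : forall y, 0 < y < gl -> v1 y < 0).
  { intros y Hy. destruct (classic (exists x, S x /\ y <= x)) as [[x [[_ Hx] Hyx]]|Hn].
    - apply Hx. lra.
    - assert (gl <= y); [|lra]. apply Hlub. intros x Sx.
      destruct (Rle_or_lt x y); auto. exfalso; apply Hn; exists x; split; auto; lra. }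
  destruct (Rlt_or_le (v1 gl) 0) as [Hgneg|Hgpos].
  - assert (Hgr : gl < r) by (destruct (Req_dec gl r) as [->|]; lra).
    assert (Hgb : 0 <= gl < b) by lra.
    destruct (continuous_eps v1 gl (is_derive_continuous _ _ _ (hs_deriv' H Hgb)) (- v1 gl))
      as [d [Hd Hcont]]; [lra|].
    set (x := Rmin (gl + d / 2) r).
    assert (x <= gl + d / 2) by apply Rmin_l. assert (x <= r) by apply Rmin_r.
    assert (gl < x) by (apply Rmin_glb_lt; lra).
    enough (Sx : S x) by (specialize (Hub x Sx); lra).
    split; [lra|]. intros y Hy. destruct (Rlt_or_le y gl); [apply Hbelow; lra|].
    assert (Hc := Hcont y ltac:(rewrite Rabs_pos_eq; lra)). apply Rabs_def2 in Hc. lra.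
  - destruct (hs_deriv_pos_left gl gl ltac:(lra) Hgpos ltac:(lra)) as [y [Hy [_ Hvy]]].
    specialize (Hbelow y Hy). lra.
Qed.

End Monotone.

Section LengthBound.
Variable Hc : R.
Hypothesis HH : 0 < Hc.
Hypothesis Hneg : forall r, 0 < r < b -> v1 r < 0.
Hypothesis Hsq : forall r, 0 < r < b -> (M - v r) * Hc <= v1 r ^ 2.

Lemma hs_sqrt_drop_growth r1 r2 : 0 < r1 <= r2 -> r2 < b ->
  (r2 - r1) * (sqrt Hc / 2) <= sqrt (M - v r2) - sqrt (M - v r1).
Proof.
  intros Hr1 Hr2.
  enough (sqrt (M - v r1) - sqrt Hc / 2 * r1 <= sqrt (M - v r2) - sqrt Hc / 2 * r2) by lra.
  apply (deriv_nonneg_incr (fun r => sqrt (M - v r) - sqrt Hc / 2 * r)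
     (fun r => - v1 r * / (2 * sqrt (M - v r)) - sqrt Hc / 2) r1 r2); [lra | |].
  - intros x Hx. assert (v x < M) by (apply (hs_lt_max H); lra).
    apply is_derive_Rminus; [|apply is_derive_linear].
    eapply is_derive_val.
    + apply (is_derive_Rcomp sqrt (fun y => M - v y)).
      * apply is_derive_Reals, derivable_pt_lim_sqrt. lra.
      * apply is_derive_Rminus; [apply is_derive_Rconst | apply (hs_deriv H); lra].
    + ring.
  - intros x Hx.
    assert (v x < M) by (apply (hs_lt_max H); lra).
    assert (Hs1 : 0 < sqrt (M - v x)) by (apply sqrt_lt_R0; lra).
    assert (Hv1 := Hneg x ltac:(lra)). assert (Hq := Hsq x ltac:(lra)).
    assert (Hk : sqrt (M - v x) * sqrt Hc <= - v1 x).
    { rewrite <- sqrt_mult by lra. rewrite <- (sqrt_pow2 (- v1 x)) by lra.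
      apply sqrt_le_1_alt. replace ((- v1 x) ^ 2) with (v1 x ^ 2) by ring. lra. }
    enough (sqrt Hc / 2 <= - v1 x * / (2 * sqrt (M - v x))) by lra.
    apply Rmult_le_reg_r with (2 * sqrt (M - v x)); [lra|].
    rewrite Rmult_assoc, Rinv_l by lra. lra.
Qed.

(* [sqrt (M - v)] grows at rate at least [sqrt Hc / 2] and stays below [sqrt M]. *)
Lemma hs_len_le : b <= 2 * sqrt M / sqrt Hc.
Proof.
  assert (Hb := hs_len H). assert (HM := hs_max_pos).
  assert (Hsh : 0 < sqrt Hc) by (apply sqrt_lt_R0; auto).
  assert (HGb : forall r, 0 < r < b -> 0 <= sqrt (M - v r) <= sqrt M).
  { intros r Hr. split; [apply sqrt_pos|]. apply sqrt_le_1_alt.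
    assert (0 < v r) by (apply (hs_pos H); lra). lra. }
  set (T := 2 * sqrt M / sqrt Hc).
  destruct (Rle_or_lt b T) as [|HbT]; auto. exfalso.
  set (e := Rmin ((b - T) / 3) (b / 3)).
  assert (e <= (b - T) / 3) by apply Rmin_l. assert (e <= b / 3) by apply Rmin_r.
  assert (0 < T) by (unfold T; apply Rdiv_lt_0_compat; [apply Rmult_lt_0_compat; [lra | apply sqrt_lt_R0] | ]; lra).
  assert (0 < e) by (apply Rmin_glb_lt; lra).
  assert (HG := hs_sqrt_drop_growth e (b - e) ltac:(lra) ltac:(lra)).
  destruct (HGb e ltac:(lra)). destruct (HGb (b - e) ltac:(lra)).
  assert (T * (sqrt Hc / 2) = sqrt M) by (unfold T; field; lra).
  nra.
Qed.

End LengthBound.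

(* With [s = sqrt (2 dl)] the hypothesis gives [v1 >= - (v + s)], so [(v + s) e^r] is
   nondecreasing; letting [v -> 0] near [b] in [M + s <= (v + s) e^r] gives [M <= s e^b]. *)
Lemma hs_max_le dl : 0 <= dl ->
  (forall r, 0 <= r < b -> v1 r ^ 2 <= 2 * dl + v r ^ 2) ->
  M <= sqrt (2 * dl) * exp b.
Proof.
  intros Hdl Hsq.
  assert (Hb := hs_len H). assert (HM := hs_max_pos).
  set (s := sqrt (2 * dl)).
  assert (Hs0 : 0 <= s) by apply sqrt_pos.
  assert (Hs2 : s * s = 2 * dl) by (apply sqrt_sqrt; lra).
  assert (HZ : forall r, 0 <= r < b -> M + s <= (v r + s) * exp r).
  { intros r Hr.
    enough ((v 0 + s) * exp 0 <= (v r + s) * exp r) by (rewrite exp_0, (hs_init H) in *; lra).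
    apply (deriv_nonneg_incr (fun y => (v y + s) * exp y)
      (fun y => (v1 y + 0) * exp y + (v y + s) * exp y) 0 r); [lra | |].
    - intros x Hx. apply (is_derive_Rmult (fun y => v y + s) exp); [|apply is_derive_exp].
      apply is_derive_Rplus; [apply (hs_deriv H); lra | apply is_derive_Rconst].
    - intros x Hx. assert (0 < exp x) by apply exp_pos.
      assert (Hq := Hsq x ltac:(lra)). assert (0 < v x) by (apply (hs_pos H); lra).
      assert (0 <= v1 x + v x + s) by nra. nra. }
  destruct (Rle_or_lt M (s * exp b)) as [|Hlt]; auto. exfalso.
  assert (Heb : 0 < exp b) by apply exp_pos.
  set (g := (M - s * exp b) / (2 * exp b)).
  assert (Hg : 0 < g) by (unfold g; apply Rdiv_lt_0_compat; lra).
  destruct (hs_small_near_end 0 g ltac:(lra) Hg) as [t [Ht Hvt]].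
  specialize (HZ t Ht).
  assert (exp t <= exp b) by (left; apply exp_increasing; lra).
  assert (0 < v t) by (apply (hs_pos H); lra).
  assert ((v t + s) * exp t <= (g + s) * exp b).
  { apply Rle_trans with ((v t + s) * exp b);
      [apply Rmult_le_compat_l | apply Rmult_le_compat_r]; lra. }
  assert ((g + s) * exp b = (M + s * exp b) / 2) by (unfold g; field; lra).
  lra.
Qed.

(* Once [v <= delta0], the energy bound forces [v1 <= - v / 2]. *)
Lemma hs_exp_decay : (forall r, 0 < r < b -> v1 r < 0) ->
  (forall r, 0 <= r < b -> 0 <= E r) ->
  forall R0, 0 < R0 < b -> v R0 <= delta0 p ->
  forall r, R0 <= r < b -> v r <= v R0 * exp (- (r - R0) / 2).
Proof.
  intros Hneg HE R0 HR HvR r Hr.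
  assert (Hdec : forall x, R0 <= x < b -> v x <= v R0).
  { intros x Hx. apply (deriv_nonpos_decr v v1 R0 x); [lra | |].
    - intros y Hy; apply (hs_deriv H); lra.
    - intros y Hy; left; apply Hneg; lra. }
  assert (Hm : v r * exp (/ 2 * r) <= v R0 * exp (/ 2 * R0)).
  { apply (deriv_nonpos_decr (fun y => v y * exp (/ 2 * y))
      (fun y => v1 y * exp (/ 2 * y) + v y * (/ 2 * exp (/ 2 * y))) R0 r); [lra | |].
    - intros x Hx. apply (is_derive_Rmult v (fun y => exp (/ 2 * y)));
        [apply (hs_deriv H); lra | apply is_derive_exp_linear].
    - intros x Hx. assert (Hx' : 0 <= x < b) by lra.
      assert (Hvx : 0 < v x) by (apply (hs_pos H); auto).
      assert (v x <= delta0 p) by (specialize (Hdec x ltac:(lra)); lra).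
      assert (Hs := Phi_small p (v x) Hp ltac:(lra)).
      specialize (HE x Hx'). unfold energy in HE.
      assert (Hv1 := Hneg x ltac:(lra)).
      assert (v1 x <= - v x / 2) by nra.
      assert (0 < exp (/ 2 * x)) by apply exp_pos.
      nra. }
  assert (Hex : exp (/ 2 * r) * exp (- (r - R0) / 2) = exp (/ 2 * R0)).
  { rewrite <- exp_plus. f_equal. field. }
  assert (0 < exp (- (r - R0) / 2)) by apply exp_pos.
  apply Rmult_le_compat_r with (r := exp (- (r - R0) / 2)) in Hm; [|lra].
  rewrite Rmult_assoc, Hex in Hm.
  assert (0 < exp (/ 2 * R0)) by apply exp_pos.
  assert (0 < v R0) by (apply (hs_pos H); lra).
  apply Rmult_le_reg_r with (exp (/ 2 * R0)); auto. nra.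
Qed.

End HalfSolution.

Lemma is_derive_reflect (f : R -> R) x a : is_derive f (- x) a ->
  is_derive (fun y => f (- y)) x (- a).
Proof.
  intros Hf. eapply is_derive_val.
  - apply (is_derive_Rcomp f (fun y => - y)); [exact Hf|].
    apply is_derive_Rext with (f := fun y => -1 * y); [intros; ring | apply is_derive_linear].
  - ring.
Qed.

Lemma two_sided_halves p (v v1 v2 c : R -> R) a b : a < 0 < b ->
  (forall r, a < r < b -> is_derive v r (v1 r) /\ is_derive v1 r (v2 r) /\ 0 < v r /\
     v2 r = v r - Rpower (v r) (p - 1) - c r * v1 r) ->
  v1 0 = 0 -> (forall r, a < r < b -> r <> 0 -> v r < v 0) ->
  (forall g, 0 < g -> exists d, 0 < d /\ forall r, b - d < r < b -> v r < g) ->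
  (forall g, 0 < g -> exists d, 0 < d /\ forall r, a < r < a + d -> v r < g) ->
  half_solution p v v1 v2 c b (v 0) /\
  half_solution p (fun r => v (- r)) (fun r => - v1 (- r)) (fun r => v2 (- r))
    (fun r => - c (- r)) (- a) (v 0).
Proof.
  intros Hab Hode H10 Hmax Hb Ha. split; split; auto; try lra.
  - intros r Hr. apply Hode; lra.
  - intros r Hr. apply Hode; lra.
  - intros r Hr. apply Hode; lra.
  - intros r Hr. apply Hode; lra.
  - intros r Hr. apply Hmax; lra.
  - rewrite Ropp_0; auto.
  - rewrite Ropp_0, H10; ring.
  - intros r Hr. apply is_derive_reflect, Hode; lra.
  - intros r Hr. eapply is_derive_val.
    + apply (is_derive_reflect (fun y => - v1 y)), is_derive_Ropp, Hode; lra.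
    + ring.
  - intros r Hr. apply Hode; lra.
  - intros r Hr. destruct (Hode (- r) ltac:(lra)) as [_ [_ [_ E]]]. rewrite E. ring.
  - intros r Hr. apply Hmax; lra.
  - intros g Hg. destruct (Ha g Hg) as [d [Hd H]]. exists d. split; auto.
    intros r Hr. apply H. lra.
Qed.

(** * Comparison of solutions *)

Lemma gronwall (D dD : R -> R) k s L : 0 < k -> 0 <= s -> 0 <= D 0 ->
  (forall r, 0 <= r <= L -> is_derive D r (dD r) /\ dD r <= k * D r + s) ->
  forall r, 0 <= r <= L -> D r + s / k <= (D 0 + s / k) * exp (k * r).
Proof.
  intros Hk Hs HD0 Hd r Hr.
  assert (Hm : (D r + s / k) * exp (- k * r) <= (D 0 + s / k) * exp (- k * 0)).
  { apply (deriv_nonpos_decr (fun y => (D y + s / k) * exp (- k * y))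
      (fun y => (dD y + 0) * exp (- k * y) + (D y + s / k) * (- k * exp (- k * y))) 0 r);
      [lra | |].
    - intros x Hx.
      apply (is_derive_Rmult (fun y => D y + s / k) (fun y => exp (- k * y)));
        [|apply is_derive_exp_linear].
      apply is_derive_Rplus; [apply Hd; lra | apply is_derive_Rconst].
    - intros x Hx. destruct (Hd x ltac:(lra)) as [_ Hle].
      assert (0 < exp (- k * x)) by apply exp_pos.
      assert (dD x + 0 + (D x + s / k) * - k <= 0).
      { replace ((D x + s / k) * - k) with (- k * D x - s) by (field; lra). lra. }
      replace ((dD x + 0) * exp (- k * x) + (D x + s / k) * (- k * exp (- k * x)))
        with ((dD x + 0 + (D x + s / k) * - k) * exp (- k * x)) by ring.
      nra. }
  rewrite Rmult_0_r, exp_0, Rmult_1_r in Hm.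
  assert (Hex : exp (- k * r) * exp (k * r) = 1).
  { rewrite <- exp_plus. replace (- k * r + k * r) with 0 by ring. apply exp_0. }
  assert (0 < exp (k * r)) by apply exp_pos.
  apply Rmult_le_compat_r with (r := exp (k * r)) in Hm; [|lra].
  rewrite Rmult_assoc, Hex, Rmult_1_r in Hm. exact Hm.
Qed.

Lemma Rpower_pm1_lipschitz p B x y : 2 < p -> 0 < x <= B -> 0 < y <= B ->
  Rabs (Rpower x (p - 1) - Rpower y (p - 1)) <= (p - 1) * Rpower B (p - 2) * Rabs (x - y).
Proof.
  intros Hp.
  assert (Hle : forall x y, 0 < x <= y -> y <= B ->
    0 <= Rpower y (p - 1) - Rpower x (p - 1) <= (p - 1) * Rpower B (p - 2) * (y - x)).
  { intros x0 y0 Hxy HyB. split.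
    - assert (Rpower x0 (p - 1) <= Rpower y0 (p - 1)) by (apply Rle_Rpower_l; lra). lra.
    - apply (deriv_le_increment (fun z => Rpower z (p - 1))
        (fun z => (p - 1) * Rpower z (p - 1 - 1)) x0 y0); [lra | |].
      + intros z Hz. apply is_derive_Rpower. lra.
      + intros z Hz. replace (p - 1 - 1) with (p - 2) by ring.
        apply Rmult_le_compat_l; [lra | apply Rle_Rpower_l; lra]. }
  intros Hx Hy. destruct (Rle_or_lt x y).
  - destruct (Hle x y ltac:(lra) ltac:(lra)).
    rewrite Rabs_minus_sym, (Rabs_minus_sym x y), !Rabs_pos_eq by lra. lra.
  - destruct (Hle y x ltac:(lra) ltac:(lra)).
    rewrite !Rabs_pos_eq by lra. lra.
Qed.

Lemma two_abs_mul_le a b : 2 * Rabs a * Rabs b <= a ^ 2 + b ^ 2.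
Proof.
  rewrite <- (pow2_abs a), <- (pow2_abs b).
  assert (0 <= (Rabs a - Rabs b) ^ 2) by apply pow2_ge_0. nra.
Qed.

(* The derivative of [(v - V)^2 + (v' - V')^2] along [v'' = v - v^(p-1) - c v'] and
   [V'' = V - V^(p-1)], with [x, x1, y, y1] standing for [v, v', V, V']. *)
Lemma gap_deriv_le p B beta x x1 y y1 c : 2 < p -> 0 <= beta -> 0 < B ->
  0 < x <= B -> 0 < y <= B -> Rabs y1 <= B -> Rabs c <= beta ->
  2 * (x - y) * (x1 - y1)
    + 2 * (x1 - y1) * ((x - Rpower x (p - 1) - c * x1) - (y - Rpower y (p - 1)))
  <= (2 + (p - 1) * Rpower B (p - 2) + 3 * beta) * ((x - y) ^ 2 + (x1 - y1) ^ 2)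
     + beta * B ^ 2.
Proof.
  intros Hp Hb HB Hx Hy Hy1 Hc.
  set (Lp := (p - 1) * Rpower B (p - 2)).
  set (X := x - y). set (Y := x1 - y1).
  set (P := Rpower x (p - 1) - Rpower y (p - 1)).
  assert (HP : Rabs P <= Lp * Rabs X) by (apply Rpower_pm1_lipschitz; lra).
  assert (HLp : 0 <= Lp) by (unfold Lp; assert (0 < Rpower B (p - 2)) by apply Rpower_gt0; nra).
  assert (Hexp : 2 * X * Y + 2 * Y * (x - Rpower x (p - 1) - c * x1 - (y - Rpower y (p - 1)))
                 = 4 * X * Y - 2 * Y * P - 2 * Y * (c * x1)) by (unfold X, Y, P; ring).
  rewrite Hexp.
  assert (h1 : 4 * X * Y <= 2 * (X ^ 2 + Y ^ 2)) by (assert (0 <= (X - Y) ^ 2) by apply pow2_ge_0; nra).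
  assert (h2 : - 2 * Y * P <= Lp * (X ^ 2 + Y ^ 2)).
  { assert (- (Y * P) <= Rabs Y * Rabs P) by (rewrite <- Rabs_mult, <- Rabs_Ropp; apply Rle_abs).
    assert (Hxy := two_abs_mul_le X Y).
    assert (Rabs Y * Rabs P <= Rabs Y * (Lp * Rabs X)) by (apply Rmult_le_compat_l; [apply Rabs_pos | auto]).
    nra. }
  assert (h3 : - 2 * Y * (c * x1) <= 3 * beta * Y ^ 2 + beta * B ^ 2).
  { assert (Hx1 : Rabs x1 <= Rabs Y + B).
    { replace x1 with (Y + y1) by (unfold Y; ring). eapply Rle_trans; [apply Rabs_triang | lra]. }
    assert (- (Y * (c * x1)) <= Rabs Y * (Rabs c * Rabs x1)).
    { rewrite <- !Rabs_mult, <- Rabs_Ropp. apply Rle_abs. }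
    assert (HaY : 0 <= Rabs Y) by apply Rabs_pos.
    assert (Rabs c * Rabs x1 <= beta * (Rabs Y + B)) by (apply Rmult_le_compat; auto; apply Rabs_pos).
    assert (Rabs Y * (Rabs c * Rabs x1) <= Rabs Y * (beta * (Rabs Y + B))) by
      (apply Rmult_le_compat_l; auto).
    assert (HYB := two_abs_mul_le Y B). rewrite (Rabs_pos_eq B) in HYB by lra.
    assert (beta * (2 * Rabs Y * B) <= beta * (Y ^ 2 + B ^ 2)) by (apply Rmult_le_compat_l; lra).
    assert (Rabs Y ^ 2 = Y ^ 2) by apply pow2_abs.
    nra. }
  assert (0 <= beta * X ^ 2) by (apply Rmult_le_pos; [lra | apply pow2_ge_0]).
  lra.
Qed.

Lemma perturbed_solution_gap p (v v1 v2 c V V1 V2 : R -> R) L B beta :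
  2 < p -> 0 <= beta -> 0 < B -> 0 <= L ->
  (forall r, 0 <= r <= L -> is_derive v r (v1 r) /\ is_derive v1 r (v2 r) /\
     0 < v r <= B /\ v2 r = v r - Rpower (v r) (p - 1) - c r * v1 r /\ Rabs (c r) <= beta) ->
  (forall r, 0 <= r <= L -> is_derive V r (V1 r) /\ is_derive V1 r (V2 r) /\
     0 < V r <= B /\ Rabs (V1 r) <= B /\ V2 r = V r - Rpower (V r) (p - 1)) ->
  forall r, 0 <= r <= L ->
  (v r - V r) ^ 2 <= ((v 0 - V 0) ^ 2 + (v1 0 - V1 0) ^ 2 + beta * B ^ 2)
      * exp ((2 + (p - 1) * Rpower B (p - 2) + 3 * beta) * L).
Proof.
  intros Hp Hb HB HL Hv HV r Hr.
  set (k := 2 + (p - 1) * Rpower B (p - 2) + 3 * beta).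
  assert (Hk : 1 <= k) by (unfold k; assert (0 < Rpower B (p - 2)) by apply Rpower_gt0; nra).
  set (s := beta * B ^ 2).
  assert (Hs : 0 <= s) by (unfold s; assert (0 <= B ^ 2) by apply pow2_ge_0; nra).
  set (D := fun y => (v y - V y) ^ 2 + (v1 y - V1 y) ^ 2).
  assert (HD : forall y, 0 <= D y)
    by (intros y; unfold D; assert (0 <= (v y - V y) ^ 2) by apply pow2_ge_0;
        assert (0 <= (v1 y - V1 y) ^ 2) by apply pow2_ge_0; lra).
  assert (Hg := gronwall D
    (fun y => 2 * (v y - V y) * (v1 y - V1 y) + 2 * (v1 y - V1 y) * (v2 y - V2 y))
    k s L ltac:(lra) Hs (HD 0)).
  assert (Hgr : D r + s / k <= (D 0 + s / k) * exp (k * r)).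
  { apply Hg; [|exact Hr]. intros y Hy.
    destruct (Hv y Hy) as [Hd1 [Hd2 [Hvy [Hode Hcy]]]].
    destruct (HV y Hy) as [Hd3 [Hd4 [HVy [HV1 HVode]]]].
    split.
    - unfold D. eapply is_derive_val.
      + apply is_derive_Rplus; apply is_derive_Rsqr; apply is_derive_Rminus; eauto.
      + cbv beta. ring.
    - rewrite Hode, HVode. apply gap_deriv_le; auto. }
  assert (0 <= s / k) by (apply Rdiv_le_0_compat; lra).
  assert (s / k <= s) by (apply Rmult_le_reg_r with k; [lra | field_simplify; nra]).
  assert (exp (k * r) <= exp (k * L)).
  { destruct (Req_dec r L) as [->|]; [lra|]. left; apply exp_increasing. nra. }
  assert (0 < exp (k * r)) by apply exp_pos.
  assert ((D 0 + s / k) * exp (k * r) <= (D 0 + s) * exp (k * L)).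
  { apply Rmult_le_compat; try lra. specialize (HD 0). lra. }
  assert (0 <= (v1 r - V1 r) ^ 2) by apply pow2_ge_0.
  change ((v r - V r) ^ 2 <= (D 0 + s) * exp (k * L)). unfold D in *. lra.
Qed.

Lemma half_solution_gap p (v v1 v2 c : R -> R) b M (V V1 V2 : R -> R) W0 bt L :
  2 < p -> half_solution p v v1 v2 c b M -> 0 < W0 -> 0 <= bt ->
  (forall r, 0 <= r < b -> Rabs (c r) <= bt) ->
  (forall r, 0 <= r <= L -> is_derive V r (V1 r) /\ is_derive V1 r (V2 r) /\
     0 < V r <= W0 /\ Rabs (V1 r) <= W0 /\ V2 r = V r - Rpower (V r) (p - 1)) ->
  V 0 = W0 -> V1 0 = 0 -> 0 <= L < b -> M <= 2 * W0 ->
  forall r, 0 <= r <= L ->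
  (v r - V r) ^ 2 <= ((M - W0) ^ 2 + bt * (2 * W0) ^ 2)
                     * exp ((2 + (p - 1) * Rpower (2 * W0) (p - 2) + 3 * bt) * L).
Proof.
  intros Hp H HW0 Hbt Hc HV HV0 HV10 HL HM r Hr.
  assert (Hgap := perturbed_solution_gap p v v1 v2 c V V1 V2 L (2 * W0) bt Hp Hbt ltac:(lra)
                    ltac:(lra)).
  rewrite (hs_init H), (hs_init' H), HV0, HV10, Rminus_0_r, pow_i, Rplus_0_r in Hgap by lia.
  apply Hgap; [| | exact Hr].
  - intros x Hx. assert (Hx' : 0 <= x < b) by lra.
    assert (v x <= M) by (apply (hs_le_max p v v1 v2 c b M H); auto).
    split; [apply (hs_deriv H); auto|]. split; [apply (hs_deriv' H); auto|].
    split; [split; [apply (hs_pos H); auto | lra]|].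
    split; [apply (hs_ode H); auto | apply Hc; auto].
  - intros x Hx. destruct (HV x Hx) as [Hd1 [Hd2 [HVx [HV1x Heq]]]].
    split; [auto | split; [auto | split; [lra | split; [lra | auto]]]].
Qed.

(** * The ground state *)

Section GroundState.
Variables (p : R) (W : R -> R).
Hypothesis Hp : 2 < p.
Hypothesis Hgs : ground_state p W.

Notation W1 := (Derive W).
Notation W2 := (Derive_n W 2).

Lemma gs_ode r : W2 r = W r - Rpower (W r) (p - 1).
Proof. destruct Hgs as [_ [_ [Hode _]]]. destruct (Hode r) as [_ [_ E]]. lra. Qed.

Lemma gs_tail_small eps : 0 < eps -> exists R0, forall r, R0 <= Rabs r -> W r < eps.
Proof.
  intros He. destruct Hgs as [_ [_ [_ [Hlp Hlm]]]].
  apply is_lim_spec in Hlp. apply is_lim_spec in Hlm.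
  destruct (Hlp (mkposreal eps He)) as [Rp HRp]. destruct (Hlm (mkposreal eps He)) as [Rm HRm].
  exists (Rmax (Rp + 1) (- Rm + 1)). intros r Hr.
  assert (A1 := Rmax_l (Rp + 1) (- Rm + 1)). assert (A2 := Rmax_r (Rp + 1) (- Rm + 1)).
  destruct (Rle_or_lt 0 r).
  - rewrite Rabs_pos_eq in Hr by lra. specialize (HRp r ltac:(lra)). simpl in HRp.
    apply Rabs_def2 in HRp. lra.
  - rewrite Rabs_left in Hr by lra. specialize (HRm r ltac:(lra)). simpl in HRm.
    apply Rabs_def2 in HRm. lra.
Qed.

Lemma gs_deriv_0 : W1 0 = 0.
Proof.
  destruct Hgs as [_ [Hmax [Hode _]]].
  apply (deriv_local_max W 0 (W1 0) 1); [apply Hode | lra | intros; apply Hmax].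
Qed.

Lemma gs_energy r : energy p W W1 r = Phi p (W 0).
Proof.
  destruct Hgs as [Hpos [_ [Hode _]]].
  rewrite <- (deriv_zero_const (energy p W W1)) with (x := 0).
  - unfold energy. rewrite gs_deriv_0. field.
  - intros x. unfold energy. eapply is_derive_val.
    + apply is_derive_Rplus.
      * apply is_derive_Rext with (f := fun y => / 2 * (W1 y ^ 2)); [intros; field|].
        apply is_derive_Rscal, is_derive_Rsqr, Hode.
      * apply is_derive_Rcomp; [apply is_derive_Phi; auto | apply Hode].
    + rewrite gs_ode. field.
Qed.

Lemma gs_Phi_max_nonneg : 0 <= Phi p (W 0).
Proof.
  destruct (Rle_or_lt 0 (Phi p (W 0))) as [|Hn]; auto. exfalso.
  destruct (gs_tail_small (sqrt (- Phi p (W 0)))) as [R0 HR]; [apply sqrt_lt_R0; lra|].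
  set (r := Rabs R0). specialize (HR r ltac:(unfold r; rewrite Rabs_Rabsolu; apply Rle_abs)).
  assert (Hs : sqrt (- Phi p (W 0)) * sqrt (- Phi p (W 0)) = - Phi p (W 0)) by (apply sqrt_sqrt; lra).
  destruct Hgs as [Hpos _]. assert (Hw := Hpos r).
  assert (- W r ^ 2 / 2 <= Phi p (W r)) by (apply Phi_ge; auto).
  assert (HE := gs_energy r). unfold energy in HE.
  assert (0 <= W1 r ^ 2) by apply pow2_ge_0.
  nra.
Qed.

Lemma gs_far_le1 : exists R1, forall x, R1 <= x -> 0 < W x <= 1.
Proof.
  destruct (gs_tail_small 1) as [R0 HR]; [lra|]. destruct Hgs as [Hpos _].
  exists (Rabs R0). intros x Hx. split; [auto|]. left; apply HR.
  assert (0 <= Rabs R0) by apply Rabs_pos. assert (R0 <= Rabs R0) by apply Rle_abs. rewrite Rabs_pos_eq; lra.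
Qed.

Lemma gs_deriv_sq_bounds x : 0 < W x <= 1 ->
  2 * Phi p (W 0) <= W1 x ^ 2 <= 2 * Phi p (W 0) + 1.
Proof.
  intros Hx. assert (HE := gs_energy x). unfold energy in HE.
  assert (Phi p (W x) <= 0).
  { rewrite Phi_PhiQ by lra. assert (PhiQ p (W x) <= PhiQ p 1) by (apply PhiQ_le; lra).
    assert (PhiQ p 1 < 0) by (apply PhiQ_1_neg; auto).
    assert (0 <= W x ^ 2) by apply pow2_ge_0. nra. }
  assert (- W x ^ 2 / 2 <= Phi p (W x)) by (apply Phi_ge; lra).
  assert (W x ^ 2 <= 1) by nra. lra.
Qed.

Lemma gs_concave_where_le1 x : 0 < W x <= 1 -> 0 <= W x * W2 x.
Proof.
  intros Hx. rewrite gs_ode, Rpower_pm1 by lra.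
  assert (Rpower (W x) (p - 2) <= 1).
  { rewrite <- (Rpower_1_base (p - 2)). apply Rle_Rpower_l; lra. }
  assert (0 <= W x * (1 - Rpower (W x) (p - 2))) by (apply Rmult_le_pos; lra).
  replace (W x * (W x - W x * Rpower (W x) (p - 2))) with (W x * (W x * (1 - Rpower (W x) (p - 2)))) by ring.
  apply Rmult_le_pos; lra.
Qed.

(* If the energy [c0] were positive, then far out (where [0 < W <= 1]) we would have
   [(W W')' = W'^2 + W W'' >= 2 c0] while [W W'] stays bounded. *)
Lemma gs_Phi_max_nonpos : Phi p (W 0) <= 0.
Proof.
  set (c0 := Phi p (W 0)).
  destruct (Rle_or_lt c0 0) as [|Hc0]; auto. exfalso.
  destruct Hgs as [_ [_ [Hode _]]].
  destruct gs_far_le1 as [R1 HR1].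
  set (C := 2 * c0 + 2).
  assert (Hbd : forall x, R1 <= x -> Rabs (W x * W1 x) <= C).
  { intros x Hx. destruct (HR1 x Hx). destruct (gs_deriv_sq_bounds x (HR1 x Hx)) as [_ Hu].
    fold c0 in Hu.
    assert (Hsq : (W x * W1 x) ^ 2 <= 2 * c0 + 1).
    { replace ((W x * W1 x) ^ 2) with (W x ^ 2 * W1 x ^ 2) by ring.
      assert (W x ^ 2 <= 1) by nra. assert (0 <= W1 x ^ 2) by apply pow2_ge_0. nra. }
    rewrite <- (pow2_abs (W x * W1 x)) in Hsq.
    assert (0 <= Rabs (W x * W1 x)) by apply Rabs_pos.
    unfold C. nra. }
  set (x := R1 + C / c0 + 1).
  assert (Hx : R1 <= x) by (unfold x; assert (0 < C / c0) by (apply Rdiv_lt_0_compat; unfold C; lra); lra).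
  assert (Hm : W R1 * W1 R1 - 2 * c0 * R1 <= W x * W1 x - 2 * c0 * x).
  { apply (deriv_nonneg_incr (fun y => W y * W1 y - 2 * c0 * y)
      (fun y => (W1 y * W1 y + W y * W2 y) - 2 * c0) R1 x); auto.
    - intros y Hy. apply is_derive_Rminus; [apply is_derive_Rmult; apply Hode | apply is_derive_linear].
    - intros y Hy. assert (Hy1 := HR1 y ltac:(lra)).
      destruct (gs_deriv_sq_bounds y Hy1) as [Hl _]. fold c0 in Hl.
      assert (H0 := gs_concave_where_le1 y Hy1). simpl in *. nra. }
  assert (H1 := Hbd R1 ltac:(lra)). assert (H2 := Hbd x Hx).
  assert (A1 := Rle_abs (- (W R1 * W1 R1))). assert (A2 := Rle_abs (W x * W1 x)).
  rewrite Rabs_Ropp in A1.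
  assert (2 * c0 * (x - R1) = 2 * C + 2 * c0) by (unfold x; field; lra).
  nra.
Qed.

Lemma gs_Phi_max : Phi p (W 0) = 0.
Proof. apply Rle_antisym; [apply gs_Phi_max_nonpos | apply gs_Phi_max_nonneg]. Qed.

Lemma gs_deriv_sq r : W1 r ^ 2 = - 2 * Phi p (W r).
Proof. assert (HE := gs_energy r). rewrite gs_Phi_max in HE. unfold energy in HE. lra. Qed.

Lemma gs_bounds r : 0 < W r <= W 0 /\ Rabs (W1 r) <= W 0.
Proof.
  destruct Hgs as [Hpos [Hmax _]]. assert (Hr := Hpos r). assert (Hm := Hmax r).
  split; [lra|].
  assert (HW1 := gs_deriv_sq r).
  assert (- W r ^ 2 / 2 <= Phi p (W r)) by (apply Phi_ge; auto).
  rewrite <- (pow2_abs (W1 r)) in HW1.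
  assert (0 <= Rabs (W1 r)) by apply Rabs_pos.
  assert (W r ^ 2 <= W 0 ^ 2) by (apply pow_incr; lra). nra.
Qed.

End GroundState.

(** * Rescaled solutions *)

Definition unscale (lam rb r : R) := r / sqrt lam + rb.
Definition rescaled_d1 (p lam rb : R) (u : R -> R) (r : R) :=
  Rpower lam (1 / (2 - p)) * (/ sqrt lam * Derive u (unscale lam rb r)).
Definition rescaled_d2 (p lam rb : R) (u : R -> R) (r : R) :=
  Rpower lam (1 / (2 - p)) * (/ sqrt lam * (/ sqrt lam * Derive_n u 2 (unscale lam rb r))).
Definition damping (N : nat) (lam rb r : R) := (INR N - 1) / (unscale lam rb r * sqrt lam).
Definition damping_bound (N : nat) (lam : R) := (INR N - 1) / sqrt lam.
Definition left_end (lam rb : R) := sqrt lam * (1 - rb).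
Definition right_end (lam rb : R) := sqrt lam * (2 - rb).

Definition clamp12 (s : R) := Rmax 1 (Rmin 2 s).

Lemma clamp12_in s : 1 <= clamp12 s <= 2.
Proof. unfold clamp12, Rmax, Rmin. repeat destruct Rle_dec; lra. Qed.

Lemma clamp12_id s : 1 <= s <= 2 -> clamp12 s = s.
Proof. intros. unfold clamp12, Rmax, Rmin. repeat destruct Rle_dec; lra. Qed.

Lemma clamp12_lipschitz s z : Rabs (clamp12 s - clamp12 z) <= Rabs (s - z).
Proof.
  unfold clamp12, Rmax, Rmin. repeat destruct Rle_dec; unfold Rabs; repeat destruct Rcase_abs; lra.
Qed.

Lemma within12_eps (u : R -> R) x0 :
  filterlim u (within (fun x => 1 <= x <= 2) (locally x0)) (locally (u x0)) ->
  forall eps, 0 < eps -> exists d, 0 < d /\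
    forall y, 1 <= y <= 2 -> Rabs (y - x0) < d -> Rabs (u y - u x0) < eps.
Proof.
  intros Hf eps He. apply filterlim_locally with (eps := mkposreal eps He) in Hf.
  destruct Hf as [d Hd]. exists d. split; [apply cond_pos | intros y Hy1 Hy2; apply (Hd y Hy2 Hy1)].
Qed.

Lemma continuous_clamp12 (u : R -> R) :
  (forall r, 1 <= r <= 2 ->
     filterlim u (within (fun x => 1 <= x <= 2) (locally r)) (locally (u r))) ->
  forall z, continuous (fun s => u (clamp12 s)) z.
Proof.
  intros Hu z. apply filterlim_locally. intros eps.
  destruct (within12_eps u (clamp12 z) (Hu _ (clamp12_in z)) eps (cond_pos eps)) as [d [Hd H]].
  exists (mkposreal d Hd). intros y Hy. change (Rabs (u (clamp12 y) - u (clamp12 z)) < eps).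
  apply H; [apply clamp12_in | eapply Rle_lt_trans; [apply clamp12_lipschitz | exact Hy]].
Qed.

Lemma INR_N_minus_1 (N : nat) : (2 <= N)%nat -> 1 <= INR N - 1.
Proof. intros HN. apply le_INR in HN. simpl in HN. lra. Qed.

Section Rescaling.
Variables (N : nat) (p lam rb : R) (u : R -> R).
Hypothesis HN : (2 <= N)%nat.
Hypothesis Hp : 2 < p.
Hypothesis Hlam : 0 < lam.
Hypothesis Hsol : pos_radial_sol N p lam u.
Hypothesis Hmax : unique_max_point u rb.

Notation sl := (sqrt lam).
Notation Lam := (Rpower lam (1 / (2 - p))).
Notation sv := (unscale lam rb).
Notation w := (rescaled p lam rb u).
Notation w1 := (rescaled_d1 p lam rb u).
Notation w2 := (rescaled_d2 p lam rb u).
Notation a := (left_end lam rb).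
Notation b := (right_end lam rb).

Lemma rescaled_eq r : w r = Lam * u (sv r).
Proof. reflexivity. Qed.

Lemma sqrt_lam_pos : 0 < sl.
Proof. apply sqrt_lt_R0; auto. Qed.

Lemma ends_spec : a < 0 < b /\ b - a = sl.
Proof.
  assert (H1 := sqrt_lam_pos). destruct Hmax as [Hrb _]. unfold left_end, right_end.
  split; [split|]; nra.
Qed.

Lemma unscale_in r : a < r < b -> 1 < sv r < 2.
Proof.
  intros Hr. assert (H1 := sqrt_lam_pos). unfold left_end, right_end in Hr. unfold unscale.
  split; apply Rmult_lt_reg_r with sl; auto; field_simplify; lra.
Qed.

Lemma unscale_0 : sv 0 = rb.
Proof. unfold unscale. assert (H1 := sqrt_lam_pos). field. lra. Qed.

Lemma is_derive_unscale r : is_derive sv r (/ sl).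
Proof.
  unfold unscale. assert (H1 := sqrt_lam_pos).
  apply is_derive_Rext with (f := fun y => / sl * y + rb); [intros; field; lra|].
  eapply is_derive_val; [apply is_derive_Rplus; [apply is_derive_linear | apply is_derive_Rconst] | ring].
Qed.

(* [lam^(1/(2-p))] is the amplitude that turns [lam u = u^(p-1)] into [w = w^(p-1)]. *)
Lemma amplitude_Rpower x : 0 < x -> Lam * / lam * Rpower x (p - 1) = Rpower (Lam * x) (p - 1).
Proof.
  intros Hx. rewrite <- Rpower_mult_distr by (auto; apply Rpower_gt0).
  f_equal. rewrite Rpower_mult.
  rewrite <- (Rpower_1 lam) at 2 by auto. rewrite <- Rpower_Ropp, <- Rpower_plus.
  f_equal. field. lra.
Qed.

Lemma rescaled_ode r : a < r < b ->
  is_derive w r (w1 r) /\ is_derive w1 r (w2 r) /\ 0 < w r /\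
  w2 r = w r - Rpower (w r) (p - 1) - damping N lam rb r * w1 r.
Proof.
  intros Hr. assert (Hs := unscale_in r Hr).
  destruct Hsol as [_ [_ [_ [Hpos Hode]]]]. destruct (Hode (sv r) Hs) as [A [B C]].
  assert (H1 := sqrt_lam_pos). assert (H2 : 0 < Lam) by apply Rpower_gt0.
  assert (Hu := Hpos (sv r) Hs).
  split; [|split; [|split]].
  - unfold rescaled, rescaled_d1. apply is_derive_Rscal.
    eapply is_derive_val; [apply is_derive_Rcomp; [apply A | apply is_derive_unscale] | ring].
  - unfold rescaled_d1, rescaled_d2. apply is_derive_Rscal, is_derive_Rscal.
    eapply is_derive_val;
      [apply (is_derive_Rcomp (Derive u) sv); [apply B | apply is_derive_unscale] | ring].
  - unfold rescaled. apply Rmult_lt_0_compat; auto.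
  - unfold rescaled, rescaled_d1, rescaled_d2, damping.
    rewrite <- amplitude_Rpower by auto. change (r / sl + rb) with (sv r).
    replace (Derive_n u 2 (sv r)) with
      (lam * u (sv r) - Rpower (u (sv r)) (p - 1) - (INR N - 1) / sv r * Derive u (sv r)) by lra.
    set (L := Lam). set (s := sl) in *.
    assert (Hl : lam = s * s) by (unfold s; rewrite sqrt_sqrt; lra).
    rewrite Hl. field. split; [lra | rewrite <- Hl; lra].
Qed.

Lemma damping_bounds r : a < r < b -> 0 <= damping N lam rb r <= damping_bound N lam.
Proof.
  intros Hr. assert (Hs := unscale_in r Hr).
  assert (H1 := sqrt_lam_pos). assert (HN1 := INR_N_minus_1 N HN).
  unfold damping, damping_bound. split.
  - apply Rdiv_le_0_compat; [lra | apply Rmult_lt_0_compat; lra].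
  - unfold Rdiv. apply Rmult_le_compat_l; [lra|]. apply Rinv_le_contravar; nra.
Qed.

Lemma rescaled_d1_0 : w1 0 = 0.
Proof.
  unfold rescaled_d1. rewrite unscale_0.
  destruct Hmax as [Hrb Hlt]. destruct Hsol as [_ [_ [_ [_ Hode]]]].
  rewrite (deriv_local_max u rb (Derive u rb) (Rmin (rb - 1) (2 - rb))); [ring | apply Hode; auto | |].
  - apply Rmin_glb_lt; lra.
  - intros y Hy. assert (Rmin (rb - 1) (2 - rb) <= rb - 1) by apply Rmin_l.
    assert (Rmin (rb - 1) (2 - rb) <= 2 - rb) by apply Rmin_r.
    destruct (Req_dec y rb) as [->|Hne]; [lra | left; apply Hlt; lra].
Qed.

Lemma rescaled_lt_0 r : a < r < b -> r <> 0 -> w r < w 0.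
Proof.
  intros Hr Hne. rewrite !rescaled_eq, unscale_0.
  apply Rmult_lt_compat_l; [apply Rpower_gt0|].
  apply Hmax; [apply unscale_in; auto|]. unfold unscale. intro E. apply Hne.
  assert (H1 := sqrt_lam_pos). assert (r / sl = 0) by lra.
  apply (f_equal (fun z => z * sl)) in H. field_simplify in H; lra.
Qed.

Lemma rescaled_vanish_at (e : R) : 1 <= e <= 2 -> u e = 0 ->
  forall g, 0 < g -> exists d, 0 < d /\
    forall r, a < r < b -> Rabs (sv r - e) < d -> w r < g.
Proof.
  intros He Hue g Hg. destruct Hsol as [Hc _].
  assert (H2 : 0 < Lam) by apply Rpower_gt0.
  destruct (within12_eps u e (Hc e He) (g / Lam)) as [d [Hd H]]; [apply Rdiv_lt_0_compat; lra|].
  exists d. split; auto. intros r Hr Hrd.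
  assert (Hs := unscale_in r Hr).
  specialize (H (sv r) ltac:(lra) Hrd). rewrite Hue, Rminus_0_r in H.
  rewrite rescaled_eq.
  apply Rle_lt_trans with (Lam * Rabs (u (sv r))); [apply Rmult_le_compat_l; [lra | apply Rle_abs]|].
  apply Rmult_lt_reg_r with (/ Lam); [apply Rinv_0_lt_compat; auto|].
  replace (Lam * Rabs (u (sv r)) * / Lam) with (Rabs (u (sv r))) by (field; lra).
  replace (g * / Lam) with (g / Lam) by reflexivity. exact H.
Qed.

Lemma rescaled_halves :
  half_solution p w w1 w2 (damping N lam rb) b (w 0) /\
  half_solution p (fun r => w (- r)) (fun r => - w1 (- r)) (fun r => w2 (- r))
    (fun r => - damping N lam rb (- r)) (- a) (w 0).
Proof.
  assert (H1 := sqrt_lam_pos). destruct ends_spec as [Hab Hba].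
  destruct Hsol as [_ [Hu1 [Hu2 _]]].
  apply two_sided_halves; [exact Hab | exact rescaled_ode | exact rescaled_d1_0
                           | exact rescaled_lt_0 | |].
  - intros g Hg. destruct (rescaled_vanish_at 2 ltac:(lra) Hu2 g Hg) as [d [Hd H]].
    exists (sl * Rmin d 1). split; [apply Rmult_lt_0_compat; auto; apply Rmin_glb_lt; lra|].
    intros r Hr. assert (Rmin d 1 <= d) by apply Rmin_l. assert (Rmin d 1 <= 1) by apply Rmin_r.
    assert (sl * Rmin d 1 <= sl) by (rewrite <- (Rmult_1_r sl) at 2; apply Rmult_le_compat_l; lra).
    assert (Hsv : 2 - Rmin d 1 < sv r < 2).
    { unfold unscale, right_end in *. split; apply Rmult_lt_reg_r with sl; auto; field_simplify; lra. }
    apply H; [split; lra | rewrite Rabs_left; lra].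
  - intros g Hg. destruct (rescaled_vanish_at 1 ltac:(lra) Hu1 g Hg) as [d [Hd H]].
    exists (sl * Rmin d 1). split; [apply Rmult_lt_0_compat; auto; apply Rmin_glb_lt; lra|].
    intros r Hr. assert (Rmin d 1 <= d) by apply Rmin_l. assert (Rmin d 1 <= 1) by apply Rmin_r.
    assert (sl * Rmin d 1 <= sl) by (rewrite <- (Rmult_1_r sl) at 2; apply Rmult_le_compat_l; lra).
    assert (Hsv : 1 < sv r < 1 + Rmin d 1).
    { unfold unscale, left_end in *. split; apply Rmult_lt_reg_r with sl; auto; field_simplify; lra. }
    apply H; [split; lra | rewrite Rabs_pos_eq; lra].
Qed.

Lemma ex_RInt_rescaled k : ex_RInt (fun r => w r ^ 2 * r ^ k) a b.
Proof.
  destruct Hsol as [Hc _]. destruct ends_spec as [[Ha Hb] _].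
  apply ex_RInt_ext with (f := fun r => (Lam * u (clamp12 (sv r))) ^ 2 * r ^ k).
  - intros x Hx. rewrite Rmin_left, Rmax_right in Hx by lra. unfold rescaled.
    rewrite clamp12_id; [auto | assert (H := unscale_in x Hx); lra].
  - apply (ex_RInt_continuous (V := R_CompleteNormedModule)). intros z _.
    apply continuous_Rmult; [|apply continuous_Rpow, (continuous_id (U := R_UniformSpace))].
    apply continuous_Rpow, continuous_Rmult;
      [apply (continuous_const (U := R_UniformSpace) (V := R_UniformSpace))|].
    apply (continuous_Rcomp sv (fun s => u (clamp12 s)));
      [apply (is_derive_continuous sv z (/ sl)), is_derive_unscale | apply continuous_clamp12; auto].
Qed.

End Rescaling.

(** * Estimates for one rescaled solution *)

Definition PhiQ_floor (p W0 eta : R) := Rmin (eta / (4 * W0 ^ 2)) (PhiQ p (2 * W0)).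

Definition sqrt_lam_threshold (N : nat) (p W0 eta : R) :=
  Rmax (4 * sqrt (1 / PhiQ_floor p W0 eta))
       (2 * (INR N - 1) * (1 + PhiQ_floor p W0 eta) / PhiQ_floor p W0 eta) + 1.

Definition gronwall_rate (p W0 : R) := 2 + (p - 1) * Rpower (2 * W0) (p - 2) + 3.

Section OneSolution.
Variables (N : nat) (p lam rb : R) (u : R -> R) (W0 : R).
Hypothesis HN : (2 <= N)%nat.
Hypothesis Hp : 2 < p.
Hypothesis Hlam : 0 < lam.
Hypothesis Hsol : pos_radial_sol N p lam u.
Hypothesis Hmax : unique_max_point u rb.
Hypothesis HW0 : 0 < W0.
Hypothesis HPW0 : Phi p W0 = 0.

Notation v := (rescaled p lam rb u).
Notation v1 := (rescaled_d1 p lam rb u).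
Notation v2 := (rescaled_d2 p lam rb u).
Notation c := (damping N lam rb).
Notation M := (rescaled p lam rb u 0).
Notation bt := (damping_bound N lam).
Notation A := (left_end lam rb).
Notation B := (right_end lam rb).
Notation vl := (fun r => rescaled p lam rb u (- r)).
Notation v1l := (fun r => - rescaled_d1 p lam rb u (- r)).
Notation v2l := (fun r => rescaled_d2 p lam rb u (- r)).
Notation cl := (fun r => - damping N lam rb (- r)).

Lemma right_half : half_solution p v v1 v2 c B M.
Proof. apply rescaled_halves; auto. Qed.

Lemma left_half : half_solution p vl v1l v2l cl (- A) M.
Proof. apply rescaled_halves; auto. Qed.

Lemma ends : A < 0 < B /\ B - A = sqrt lam.
Proof. apply (ends_spec lam rb u); auto. Qed.

Lemma rescaled_le_max r : A < r < B -> v r <= M.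
Proof.
  intros Hr. destruct (Rle_or_lt 0 r).
  - apply (hs_le_max p v v1 v2 c B M right_half). lra.
  - assert (Hq := hs_le_max p vl v1l v2l cl (- A) M left_half (- r) ltac:(lra)).
    cbv beta in Hq. rewrite Ropp_involutive in Hq. exact Hq.
Qed.

Lemma damping_right r : 0 <= r < B -> 0 <= c r <= bt.
Proof. intros. destruct ends as [[? ?] _]. apply damping_bounds; auto; lra. Qed.

Lemma damping_left r : 0 <= r < - A -> - bt <= cl r <= 0.
Proof.
  intros. destruct ends as [[? ?] _].
  destruct (damping_bounds N lam rb HN Hlam (- r)); lra.
Qed.

Lemma damping_bound_pos : 0 < bt.
Proof.
  unfold damping_bound. apply Rdiv_lt_0_compat.
  - assert (H := INR_N_minus_1 N HN). lra.
  - apply sqrt_lt_R0; auto.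
Qed.

Lemma energy_right_nonneg r : 0 <= r < B -> 0 <= energy p v v1 r.
Proof. apply (energy_nonneg p v v1 v2 c B M Hp right_half). intros; apply damping_right; auto. Qed.

Lemma Phi_max_nonneg : 0 <= Phi p M.
Proof.
  rewrite <- (energy_0 p v v1 v2 c B M right_half).
  apply energy_right_nonneg. destruct ends as [[? ?] _]. lra.
Qed.

Lemma max_ge_zero : W0 <= M.
Proof.
  apply (Phi_nonneg_ge p W0 Hp HW0 HPW0); [apply (hs_max_pos p v v1 v2 c B M right_half) | apply Phi_max_nonneg].
Qed.

Lemma energy_left_ge r : 0 <= r < - A -> Phi p M <= energy p vl v1l r.
Proof.
  intros Hr. rewrite <- (energy_0 p vl v1l v2l cl (- A) M left_half).
  apply (energy_incr p vl v1l v2l cl (- A) M Hp left_half); auto.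
  intros; apply damping_left; auto.
Qed.

Lemma deriv_right_neg r : 0 < r < B -> v1 r < 0.
Proof. apply (hs_deriv_neg p v v1 v2 c B M Hp right_half W0 HW0 HPW0 energy_right_nonneg). Qed.

Lemma deriv_left_neg r : 0 < r < - A -> v1l r < 0.
Proof.
  apply (hs_deriv_neg p vl v1l v2l cl (- A) M Hp left_half W0 HW0 HPW0).
  intros r0 Hr0. assert (H := energy_left_ge r0 Hr0). assert (H2 := Phi_max_nonneg). lra.
Qed.

Lemma rescaled_exp_decay R0 : 0 < R0 -> R0 < B -> R0 < - A ->
  v R0 <= delta0 p -> v (- R0) <= delta0 p ->
  forall r, A < r < B -> R0 <= Rabs r -> v r <= delta0 p * exp (- (Rabs r - R0) / 2).
Proof.
  intros HR0 HRB HRA Hw1 Hw2 r Hr HRr.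
  assert (Hdp := delta0_pos p).
  destruct (Rle_or_lt 0 r) as [Hr0|Hr0].
  - rewrite Rabs_pos_eq in * by lra.
    assert (T := hs_exp_decay p v v1 v2 c B M Hp right_half deriv_right_neg energy_right_nonneg
                   R0 ltac:(lra) Hw1 r ltac:(lra)).
    assert (0 < exp (- (r - R0) / 2)) by apply exp_pos.
    assert (v R0 * exp (- (r - R0) / 2) <= delta0 p * exp (- (r - R0) / 2))
      by (apply Rmult_le_compat_r; lra).
    lra.
  - rewrite Rabs_left in * by lra.
    assert (HEl : forall x, 0 <= x < - A -> 0 <= energy p vl v1l x).
    { intros x Hx. assert (H1 := energy_left_ge x Hx). assert (H2 := Phi_max_nonneg). lra. }
    assert (T := hs_exp_decay p vl v1l v2l cl (- A) M Hp left_half deriv_left_neg HEl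
                   R0 ltac:(lra) Hw2 (- r) ltac:(lra)).
    cbv beta in T. rewrite Ropp_involutive in T.
    assert (0 < exp (- (- r - R0) / 2)) by apply exp_pos.
    assert (v (- R0) * exp (- (- r - R0) / 2) <= delta0 p * exp (- (- r - R0) / 2))
      by (apply Rmult_le_compat_r; lra).
    lra.
Qed.

Section PositiveEnergy.
Hypothesis HPM : 0 < Phi p M.

Notation q := (PhiQ p M).
Notation slope := (Phi p M / M).

Lemma chord_slope_pos : 0 < slope.
Proof. apply Rdiv_lt_0_compat; [auto | apply (hs_max_pos p v v1 v2 c B M right_half)]. Qed.

Lemma right_end_le : bt <= q / (2 * (1 + q)) -> B <= 2 * sqrt M / sqrt slope.
Proof.
  intros Hbt.
  assert (HM := hs_max_pos p v v1 v2 c B M right_half).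
  assert (HPq : Phi p M = M ^ 2 * q) by (apply Phi_PhiQ; auto).
  assert (Hq : 0 < q) by (assert (0 < M ^ 2) by (apply pow_lt; auto); nra).
  apply (hs_len_le p v v1 v2 c B M right_half slope chord_slope_pos deriv_right_neg).
  intros r Hr. assert (Hr' : 0 <= r < B) by lra.
  assert (HEl := energy_lower p v v1 v2 c B M Hp right_half
                   (fun r Hr => proj1 (damping_right r Hr)) bt
                   (fun r Hr => proj2 (damping_right r Hr)) deriv_right_neg r Hr').
  rewrite (energy_0 p v v1 v2 c B M right_half) in HEl.
  set (K := sqrt (2 * Phi p M + M ^ 2)) in HEl.
  assert (HK : K <= M * (1 + q)).
  { unfold K. rewrite <- (sqrt_pow2 (M * (1 + q))) by nra. apply sqrt_le_1_alt. rewrite HPq. nra. }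
  assert (HbK : bt * K <= slope / 2).
  { assert (0 < bt) by apply damping_bound_pos.
    apply Rle_trans with (bt * (M * (1 + q))); [apply Rmult_le_compat_l; lra|].
    apply Rle_trans with (q / (2 * (1 + q)) * (M * (1 + q))); [apply Rmult_le_compat_r; nra|].
    right. rewrite HPq. field. lra. }
  assert (Hv := hs_pos right_half Hr').
  assert (HvM := hs_le_max p v v1 v2 c B M right_half r Hr').
  assert (Hhl := Phi_chord p W0 Hp HW0 HPW0 (v r) M ltac:(lra) Phi_max_nonneg).
  unfold energy in HEl.
  assert (bt * K * (M - v r) <= slope / 2 * (M - v r)) by (apply Rmult_le_compat_r; lra).
  nra.
Qed.

Lemma left_end_le : - A <= 2 * sqrt M / sqrt slope.
Proof.
  apply (hs_len_le p vl v1l v2l cl (- A) M left_half slope chord_slope_pos deriv_left_neg).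
  intros r Hr. assert (Hr' : 0 <= r < - A) by lra.
  assert (HEl := energy_left_ge r Hr').
  assert (Hv := hs_pos left_half Hr').
  assert (HvM := hs_le_max p vl v1l v2l cl (- A) M left_half r Hr').
  assert (Hhl := Phi_chord p W0 Hp HW0 HPW0 (vl r) M ltac:(lra) Phi_max_nonneg).
  unfold energy in HEl. cbv beta in *.
  assert (0 <= (M - v (- r)) * slope) by (apply Rmult_le_pos; [lra | left; apply chord_slope_pos]).
  replace ((- v1 (- r)) ^ 2) with (v1 (- r) ^ 2) in HEl by ring.
  lra.
Qed.

Lemma sqrt_lam_le : bt <= q / (2 * (1 + q)) -> sqrt lam <= 4 * sqrt (1 / q).
Proof.
  intros Hbt.
  assert (HM := hs_max_pos p v v1 v2 c B M right_half).
  assert (HPq : Phi p M = M ^ 2 * q) by (apply Phi_PhiQ; auto).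
  assert (Hq : 0 < q) by (assert (0 < M ^ 2) by (apply pow_lt; auto); nra).
  assert (Hsq : sqrt M / sqrt slope = sqrt (1 / q)).
  { rewrite <- sqrt_div_alt by apply chord_slope_pos. f_equal. rewrite HPq. field. lra. }
  assert (HB := right_end_le Hbt). assert (HA := left_end_le).
  destruct ends as [_ Hsum].
  replace (2 * sqrt M / sqrt slope) with (2 * (sqrt M / sqrt slope)) in * by (unfold Rdiv; ring).
  rewrite Hsq in *. lra.
Qed.

End PositiveEnergy.

Lemma PhiQ_floor_pos eta : 0 < eta -> 0 < PhiQ_floor p W0 eta.
Proof.
  intros He. unfold PhiQ_floor. apply Rmin_glb_lt.
  - apply Rdiv_lt_0_compat; auto. assert (0 < W0 ^ 2) by (apply pow_lt; auto). lra.
  - rewrite <- (PhiQ_zero p W0 HW0 HPW0). apply PhiQ_lt; lra.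
Qed.

Lemma PhiQ_ge_floor eta : 0 < eta -> eta <= Phi p M -> PhiQ_floor p W0 eta <= PhiQ p M.
Proof.
  intros He Hge. assert (HM := hs_max_pos p v v1 v2 c B M right_half).
  assert (HPq : Phi p M = M ^ 2 * PhiQ p M) by (apply Phi_PhiQ; auto).
  destruct (Rle_or_lt M (2 * W0)).
  - apply Rle_trans with (eta / (4 * W0 ^ 2)); [apply Rmin_l|].
    assert (0 < M ^ 2) by (apply pow_lt; auto).
    assert (M ^ 2 <= 4 * W0 ^ 2) by nra.
    assert (0 < W0 ^ 2) by (apply pow_lt; auto).
    apply Rmult_le_reg_r with (4 * W0 ^ 2); [lra|].
    replace (eta / (4 * W0 ^ 2) * (4 * W0 ^ 2)) with eta by (field; lra).
    assert (0 <= PhiQ p M) by (apply (PhiQ_nonneg p W0); auto; apply max_ge_zero).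
    nra.
  - apply Rle_trans with (PhiQ p (2 * W0)); [apply Rmin_r | apply PhiQ_le; lra].
Qed.

Lemma Phi_max_small eta : 0 < eta -> sqrt_lam_threshold N p W0 eta <= sqrt lam -> Phi p M < eta.
Proof.
  intros He HS. destruct (Rlt_or_le (Phi p M) eta) as [|Hge]; auto. exfalso.
  set (qe := PhiQ_floor p W0 eta). assert (Hqe : 0 < qe) by (apply PhiQ_floor_pos; auto).
  set (q := PhiQ p M). assert (Hqq : qe <= q) by (apply PhiQ_ge_floor; auto).
  assert (HS1 : 4 * sqrt (1 / qe) < sqrt lam).
  { assert (H := Rmax_l (4 * sqrt (1 / qe)) (2 * (INR N - 1) * (1 + qe) / qe)).
    unfold sqrt_lam_threshold in HS. fold qe in HS. lra. }
  assert (HS2 : 2 * (INR N - 1) * (1 + qe) / qe < sqrt lam).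
  { assert (H := Rmax_r (4 * sqrt (1 / qe)) (2 * (INR N - 1) * (1 + qe) / qe)).
    unfold sqrt_lam_threshold in HS. fold qe in HS. lra. }
  assert (Hsl : 0 < sqrt lam) by (apply sqrt_lt_R0; auto).
  assert (HN1 := INR_N_minus_1 N HN).
  assert (Hbt : bt <= q / (2 * (1 + q))).
  { unfold damping_bound. apply Rle_trans with (qe / (2 * (1 + qe))).
    - apply Rmult_le_reg_r with (sqrt lam * (2 * (1 + qe)) / qe); [apply Rdiv_lt_0_compat; nra|].
      replace ((INR N - 1) / sqrt lam * (sqrt lam * (2 * (1 + qe)) / qe))
        with (2 * (INR N - 1) * (1 + qe) / qe) by (field; lra).
      replace (qe / (2 * (1 + qe)) * (sqrt lam * (2 * (1 + qe)) / qe)) with (sqrt lam) by (field; lra).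
      lra.
    - apply Rmult_le_reg_r with (2 * (1 + q) * (1 + qe)); [nra|]. field_simplify; nra. }
  assert (H4 := sqrt_lam_le ltac:(lra) Hbt). fold q in H4.
  assert (sqrt (1 / q) <= sqrt (1 / qe)).
  { apply sqrt_le_1_alt. apply Rmult_le_reg_r with (q * qe); [nra|]. field_simplify; lra. }
  lra.
Qed.

(* For small energy, [v] cannot drop from [M > 1] to [0] in time [L]: see [hs_max_le]. *)
Lemma right_end_gt L : Phi p M < exp (-2 * L) / 2 -> L < B.
Proof.
  intros Hs.
  set (dl := Phi p M).
  assert (Hdl : 0 <= dl) by apply Phi_max_nonneg.
  assert (Hyp : forall r, 0 <= r < B -> v1 r ^ 2 <= 2 * dl + v r ^ 2).
  { intros r Hr. assert (H1 := deriv_sq_le_energy p v v1 v2 c B M Hp right_half r Hr).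
    assert (H2 := energy_decr p v v1 v2 c B M Hp right_half
                    (fun r Hr => proj1 (damping_right r Hr)) 0 r ltac:(lra) ltac:(lra)).
    rewrite (energy_0 p v v1 v2 c B M right_half) in H2. unfold dl. lra. }
  assert (HL0 := hs_max_le p v v1 v2 c B M right_half dl Hdl Hyp).
  assert (Hsq : sqrt (2 * dl) < exp (- L)).
  { rewrite <- (sqrt_square (exp (- L))) by (left; apply exp_pos).
    apply sqrt_lt_1_alt. split; [lra|]. rewrite <- exp_plus.
    replace (- L + - L) with (-2 * L) by ring. unfold dl. lra. }
  destruct (Rlt_or_le L B) as [|HBL]; auto. exfalso.
  assert (exp B <= exp L) by (destruct (Req_dec B L) as [->|]; [lra | left; apply exp_increasing; lra]).
  assert (Hone : exp (- L) * exp L = 1) by (rewrite <- exp_plus; replace (- L + L) with 0 by ring; apply exp_0).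
  assert (0 < exp B) by apply exp_pos. assert (0 <= sqrt (2 * dl)) by apply sqrt_pos.
  assert (0 < exp L) by apply exp_pos.
  assert (sqrt (2 * dl) * exp B <= sqrt (2 * dl) * exp L) by (apply Rmult_le_compat_l; lra).
  assert (sqrt (2 * dl) * exp L < exp (- L) * exp L) by (apply Rmult_lt_compat_r; lra).
  assert (Hg1 := zero_of_Phi_gt1 p W0 Hp HW0 HPW0). assert (Hg2 := max_ge_zero). lra.
Qed.

Lemma left_end_gt L : 0 <= L ->
  2 * Phi p M * exp (2 * bt * L) + M ^ 2 * (exp (2 * bt * L) - 1) < exp (-2 * L) -> L < - A.
Proof.
  intros HL0 Hs. destruct (Rlt_or_le L (- A)) as [|HAL]; auto. exfalso.
  assert (Hbt := damping_bound_pos).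
  set (e := exp (2 * bt * L)).
  assert (He1 : 1 <= e) by (unfold e; rewrite <- exp_0; destruct (Req_dec L 0) as [->|];
     [rewrite Rmult_0_r; lra | left; apply exp_increasing; nra]).
  set (dl := ((2 * Phi p M + M ^ 2) * e - M ^ 2) / 2).
  assert (HE0 := Phi_max_nonneg).
  assert (Hdl : 0 <= dl) by (unfold dl; assert (0 <= M ^ 2) by apply pow2_ge_0; nra).
  assert (Hyp : forall r, 0 <= r < - A -> v1l r ^ 2 <= 2 * dl + vl r ^ 2).
  { intros r Hr. assert (H1 := deriv_sq_le_energy p vl v1l v2l cl (- A) M Hp left_half r Hr).
    assert (H2 := energy_upper p vl v1l v2l cl (- A) M Hp left_half
                    (fun r Hr => proj2 (damping_left r Hr)) bt ltac:(lra)
                    (fun r Hr => proj1 (damping_left r Hr)) r Hr).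
    rewrite (energy_0 p vl v1l v2l cl (- A) M left_half) in H2.
    assert (exp (2 * bt * r) <= e) by (unfold e; destruct (Req_dec r L) as [->|]; [lra | left; apply exp_increasing; nra]).
    assert (0 <= 2 * Phi p M + M ^ 2) by (assert (0 <= M ^ 2) by apply pow2_ge_0; lra).
    assert ((2 * Phi p M + M ^ 2) * exp (2 * bt * r) <= (2 * Phi p M + M ^ 2) * e) by (apply Rmult_le_compat_l; auto).
    unfold dl. lra. }
  assert (HL1 := hs_max_le p vl v1l v2l cl (- A) M left_half dl Hdl Hyp).
  assert (Hsq : sqrt (2 * dl) < exp (- L)).
  { rewrite <- (sqrt_square (exp (- L))) by (left; apply exp_pos).
    apply sqrt_lt_1_alt. split; [lra|]. rewrite <- exp_plus.
    replace (- L + - L) with (-2 * L) by ring. unfold dl. fold e in Hs. lra. }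
  assert (exp (- A) <= exp L) by (destruct (Req_dec (- A) L) as [->|]; [lra | left; apply exp_increasing; lra]).
  assert (Hone : exp (- L) * exp L = 1) by (rewrite <- exp_plus; replace (- L + L) with 0 by ring; apply exp_0).
  assert (0 < exp (- A)) by apply exp_pos. assert (0 <= sqrt (2 * dl)) by apply sqrt_pos.
  assert (0 < exp L) by apply exp_pos.
  assert (sqrt (2 * dl) * exp (- A) <= sqrt (2 * dl) * exp L) by (apply Rmult_le_compat_l; lra).
  assert (sqrt (2 * dl) * exp L < exp (- L) * exp L) by (apply Rmult_lt_compat_r; lra).
  assert (Hg1 := zero_of_Phi_gt1 p W0 Hp HW0 HPW0). assert (Hg2 := max_ge_zero). lra.
Qed.

Lemma ground_state_reflect_facts W x : ground_state p W ->
  is_derive (fun y => W (- y)) x (- Derive W (- x)) /\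
  is_derive (fun y => - Derive W (- y)) x (Derive_n W 2 (- x)).
Proof.
  intros [_ [_ [Hode _]]]. destruct (Hode (- x)) as [Hd1 [Hd2 _]]. split.
  - apply is_derive_reflect, Hd1.
  - eapply is_derive_val; [apply (is_derive_reflect (fun y => - Derive W y)), is_derive_Ropp, Hd2 | ring].
Qed.

Lemma rescaled_near_ground_state W : ground_state p W -> W 0 = W0 ->
  forall L, 0 <= L -> L < B -> L < - A -> M <= 2 * W0 -> bt <= 1 ->
  forall r, - L <= r <= L ->
  (v r - W r) ^ 2 <= ((M - W0) ^ 2 + bt * (2 * W0) ^ 2) * exp (gronwall_rate p W0 * L).
Proof.
  intros Hgs HW0e L HLz HLB HLA HM2 Hb1 r Hr.
  assert (Hbt := damping_bound_pos).
  assert (Hkap : exp ((2 + (p - 1) * Rpower (2 * W0) (p - 2) + 3 * bt) * L)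
                 <= exp (gronwall_rate p W0 * L)).
  { unfold gronwall_rate. destruct (Req_dec L 0) as [->|]; [rewrite !Rmult_0_r; lra|].
    destruct (Req_dec bt 1) as [->|]; [right; f_equal; ring | left; apply exp_increasing].
    apply Rmult_lt_compat_r; lra. }
  assert (HD0 : 0 <= (M - W0) ^ 2 + bt * (2 * W0) ^ 2).
  { assert (0 <= (M - W0) ^ 2) by apply pow2_ge_0. assert (0 <= (2 * W0) ^ 2) by apply pow2_ge_0. nra. }
  eapply Rle_trans; [|apply Rmult_le_compat_l; [exact HD0 | exact Hkap]].
  assert (HW1 := gs_deriv_0 p W Hgs).
  pose proof Hgs as [_ [_ [Hode _]]].
  destruct (Rle_or_lt 0 r) as [Hr0|Hr0].
  - apply (half_solution_gap p v v1 v2 c B M W (Derive W) (Derive_n W 2) W0 bt L Hp right_half);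
      auto; try lra.
    + intros x Hx. destruct (damping_right x Hx). rewrite Rabs_pos_eq; lra.
    + intros x Hx. destruct (gs_bounds p W Hp Hgs x) as [Hb1' Hb2']. destruct (Hode x) as [A1 [A2 _]].
      rewrite HW0e in *. split; [auto | split; [auto | split; [lra | split; [lra | apply (gs_ode p W Hgs)]]]].
  - replace (v r - W r) with (vl (- r) - (fun y => W (- y)) (- r))
      by (cbv beta; rewrite Ropp_involutive; reflexivity).
    apply (half_solution_gap p vl v1l v2l cl (- A) M (fun y => W (- y)) (fun y => - Derive W (- y))
             (fun y => Derive_n W 2 (- y)) W0 bt L Hp left_half); cbv beta; auto; try lra.
    + intros x Hx. destruct (damping_left x Hx). rewrite Rabs_left1; lra.
    + intros x Hx. destruct (gs_bounds p W Hp Hgs (- x)) as [Hb1' Hb2'].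
      destruct (ground_state_reflect_facts W x Hgs) as [A1 A2]. rewrite HW0e in *.
      split; [auto | split; [auto | split; [lra | split; [rewrite Rabs_Ropp; lra | apply (gs_ode p W Hgs)]]]].
    + rewrite Ropp_0; auto.
    + rewrite Ropp_0, HW1; ring.
Qed.

End OneSolution.

(** * Integrals with exponential tails *)

Lemma exists_nat_gt X : exists m : nat, X < INR m.
Proof.
  destruct (nfloor_ex (Rmax X 0) (Rmax_r X 0)) as [n Hn]. exists (S n).
  rewrite S_INR. assert (H := Rmax_l X 0). lra.
Qed.

Lemma pow_le_exp_half k : exists C, 0 < C /\ forall x, 0 <= x -> x ^ k <= C * exp (x / 2).
Proof.
  induction k as [|k [C [HC IH]]].
  - exists 1. split; [lra|]. intros x Hx. simpl.
    assert (H := exp_ineq1_le (x / 2)). lra.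
  - set (C' := 2 * INR (S k) * C + 1).
    assert (0 <= INR (S k)) by apply pos_INR.
    assert (HC' : 0 < C') by (unfold C'; nra).
    exists C'. split; [exact HC'|].
    intros x Hx.
    enough (Hm : C' * exp (/ 2 * 0) - 0 ^ S k <= C' * exp (/ 2 * x) - x ^ S k).
    { replace (x / 2) with (/ 2 * x) by field.
      rewrite Rmult_0_r, exp_0, pow_i in Hm by lia. lra. }
    apply (deriv_nonneg_incr (fun y => C' * exp (/ 2 * y) - y ^ S k)
       (fun y => C' * (/ 2 * exp (/ 2 * y)) - INR (S k) * y ^ k) 0 x Hx).
    + intros y Hy. apply is_derive_Rminus.
      * apply is_derive_Rscal, is_derive_exp_linear.
      * apply is_derive_Reals, derivable_pt_lim_pow.
    + intros y Hy. specialize (IH y ltac:(lra)).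
      assert (0 < exp (y / 2)) by apply exp_pos.
      replace (/ 2 * y) with (y / 2) by field.
      assert (INR (S k) * y ^ k <= INR (S k) * (C * exp (y / 2))) by (apply Rmult_le_compat_l; auto).
      unfold C'. nra.
Qed.

Lemma RInt_Chasles_R (f : R -> R) a b c : ex_RInt f a b -> ex_RInt f b c ->
  RInt f a c = RInt f a b + RInt f b c.
Proof. intros H1 H2. symmetry. apply (RInt_Chasles (V := R_CompleteNormedModule)); auto. Qed.

Lemma RInt_of_antiderivative (F f : R -> R) a b : a <= b ->
  (forall x, is_derive F x (f x)) -> (forall x, continuous f x) ->
  ex_RInt f a b /\ RInt f a b = F b - F a.
Proof.
  intros Hab Hd Hc.
  assert (H : is_RInt f a b (minus (F b) (F a)))
    by (apply (is_RInt_derive (V := R_CompleteNormedModule)); intros; auto).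
  split; [exists (minus (F b) (F a)); exact H|].
  rewrite (is_RInt_unique (V := R_CompleteNormedModule) f a b _ H). reflexivity.
Qed.

Lemma RInt_exp_bound (f : R -> R) s C x1 x2 : s * s = 1 -> 0 <= C -> x1 <= x2 ->
  ex_RInt f x1 x2 -> (forall x, x1 < x < x2 -> Rabs (f x) <= C * exp (s * x / 2)) ->
  Rabs (RInt f x1 x2) <= 2 * C * (s * (exp (s * x2 / 2) - exp (s * x1 / 2))).
Proof.
  intros Hs HC H12 Hf Hb.
  assert (Hanti : forall K, ex_RInt (fun y => K * exp (s * y / 2)) x1 x2 /\
            RInt (fun y => K * exp (s * y / 2)) x1 x2
            = 2 * s * K * exp (s * x2 / 2) - 2 * s * K * exp (s * x1 / 2)).
  { intros K. apply (RInt_of_antiderivative (fun y => 2 * s * K * exp (s * y / 2))); auto.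
    - intros x. eapply is_derive_val.
      + apply is_derive_Rscal.
        apply is_derive_Rext with (f := fun y => exp (s / 2 * y)); [intros; f_equal; field|].
        apply is_derive_exp_linear.
      + replace (s / 2 * x) with (s * x / 2) by field.
        replace (2 * s * K * (s / 2 * exp (s * x / 2))) with (s * s * K * exp (s * x / 2)) by field.
        rewrite Hs. ring.
    - intros x. apply continuous_Rmult;
        [apply (continuous_const (U := R_UniformSpace) (V := R_UniformSpace))|].
      eapply is_derive_continuous.
      apply is_derive_Rext with (f := fun y => exp (s / 2 * y)); [intros; f_equal; field|].
      apply is_derive_exp_linear. }
  destruct (Hanti C) as [E1 R1]. destruct (Hanti (- C)) as [E2 R2].
  assert (RInt f x1 x2 <= RInt (fun y => C * exp (s * y / 2)) x1 x2).
  { apply RInt_le; auto. intros x Hx. specialize (Hb x Hx). apply Rabs_le_between in Hb. lra. }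
  assert (RInt (fun y => - C * exp (s * y / 2)) x1 x2 <= RInt f x1 x2).
  { apply RInt_le; auto. intros x Hx. specialize (Hb x Hx). apply Rabs_le_between in Hb. lra. }
  apply Rabs_le_between. split; nra.
Qed.

Lemma RInt_tail_right (f : R -> R) C L Y : 0 <= C -> L <= Y -> ex_RInt f L Y ->
  (forall x, L < x < Y -> Rabs (f x) <= C * exp (- Rabs x / 2)) -> 0 <= L ->
  Rabs (RInt f L Y) <= 2 * C * exp (- L / 2).
Proof.
  intros HC HLY Hf Hb HL.
  eapply Rle_trans.
  - apply (RInt_exp_bound f (-1) C L Y); [ring | auto | auto | auto |].
    intros x Hx. rewrite <- Rabs_pos_eq with (x := x) at 2 by lra.
    replace (-1 * Rabs x / 2) with (- Rabs x / 2) by field. apply Hb; auto.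
  - replace (-1 * Y / 2) with (- Y / 2) by field. replace (-1 * L / 2) with (- L / 2) by field.
    assert (0 < exp (- Y / 2)) by apply exp_pos. nra.
Qed.

Lemma RInt_tail_left (f : R -> R) C L Y : 0 <= C -> Y <= - L -> ex_RInt f Y (- L) ->
  (forall x, Y < x < - L -> Rabs (f x) <= C * exp (- Rabs x / 2)) -> 0 <= L ->
  Rabs (RInt f Y (- L)) <= 2 * C * exp (- L / 2).
Proof.
  intros HC HLY Hf Hb HL.
  eapply Rle_trans.
  - apply (RInt_exp_bound f 1 C Y (- L)); [ring | auto | auto | auto |].
    intros x Hx. replace (1 * x / 2) with (- Rabs x / 2) by (rewrite Rabs_left by lra; field).
    apply Hb; auto.
  - replace (1 * - L / 2) with (- L / 2) by field.
    assert (0 < exp (1 * Y / 2)) by apply exp_pos. nra.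
Qed.

Lemma RInt_diff_le (f g : R -> R) a b K : a <= b -> ex_RInt f a b -> ex_RInt g a b ->
  (forall x, a <= x <= b -> Rabs (f x - g x) <= K) ->
  Rabs (RInt f a b - RInt g a b) <= (b - a) * K.
Proof.
  intros Hab Hf Hg Hb.
  change (Rabs (minus (RInt f a b) (RInt g a b)) <= (b - a) * K).
  rewrite <- (RInt_minus (V := R_CompleteNormedModule)) by auto.
  apply abs_RInt_le_const; auto.
  apply (ex_RInt_minus (V := R_NormedModule)); auto.
Qed.

Lemma exp_tail_small C eps : 0 < eps -> exists L0, forall L, L0 <= L -> 2 * C * exp (- L / 2) < eps.
Proof.
  intros He. exists (Rmax 1 (4 * Rabs C / eps + 1)). intros L HL.
  assert (A1 := Rmax_l 1 (4 * Rabs C / eps + 1)). assert (A2 := Rmax_r 1 (4 * Rabs C / eps + 1)).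
  assert (HC := Rabs_pos C). assert (Hc := Rle_abs C).
  assert (Hi := exp_ineq1 (L / 2) ltac:(lra)).
  assert (Hex : exp (- L / 2) * exp (L / 2) = 1)
    by (rewrite <- exp_plus; replace (- L / 2 + L / 2) with 0 by field; apply exp_0).
  assert (0 < exp (- L / 2)) by apply exp_pos.
  assert (exp (- L / 2) * (L / 2) < 1) by nra.
  assert (4 * Rabs C < eps * L).
  { assert (4 * Rabs C / eps < L) by lra.
    apply Rmult_lt_compat_l with (r := eps) in H1; [|lra].
    replace (eps * (4 * Rabs C / eps)) with (4 * Rabs C) in H1 by (field; lra). lra. }
  assert (2 * Rabs C * (exp (- L / 2) * (L / 2)) <= 2 * Rabs C) by nra.
  nra.
Qed.

Section ExpTails.
Variables (g : R -> R) (C R0 : R).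
Hypothesis HR0 : 0 <= R0.
Hypothesis Hg : forall a b, ex_RInt g a b.
Hypothesis Htail : forall x, R0 <= Rabs x -> Rabs (g x) <= C * exp (- Rabs x / 2).

Lemma tail_const_nonneg : 0 <= C.
Proof.
  assert (H := Htail R0 ltac:(rewrite Rabs_pos_eq; lra)).
  assert (0 < exp (- Rabs R0 / 2)) by apply exp_pos.
  assert (0 <= Rabs (g R0)) by apply Rabs_pos. nra.
Qed.

Lemma RInt_near_sym x y L : R0 <= L -> x <= - L -> L <= y ->
  Rabs (RInt g x y - RInt g (- L) L) <= 4 * C * exp (- L / 2).
Proof.
  intros HL Hx Hy. assert (HC := tail_const_nonneg).
  rewrite (RInt_Chasles_R g x (- L) y), (RInt_Chasles_R g (- L) L y) by auto.
  assert (A1 : Rabs (RInt g x (- L)) <= 2 * C * exp (- L / 2)).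
  { apply RInt_tail_left; auto; try lra. intros z Hz. apply Htail. rewrite Rabs_left; lra. }
  assert (A2 : Rabs (RInt g L y) <= 2 * C * exp (- L / 2)).
  { apply RInt_tail_right; auto; try lra. intros z Hz. apply Htail. rewrite Rabs_pos_eq; lra. }
  replace (RInt g x (- L) + (RInt g (- L) L + RInt g L y) - RInt g (- L) L)
    with (RInt g x (- L) + RInt g L y) by ring.
  eapply Rle_trans; [apply Rabs_triang | lra].
Qed.

(* The symmetric integrals over [[-m, m]] form a Cauchy sequence. *)
Lemma sym_RInt_lim : exists I,
  forall L, R0 <= L -> Rabs (RInt g (- L) L - I) <= 4 * C * exp (- L / 2).
Proof.
  set (F := fun m : nat => RInt g (- INR m) (INR m)).
  assert (Hcau : ex_lim_seq_cauchy F).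
  { intros eps. destruct (exp_tail_small (2 * C) (eps / 2)) as [L0 HL0];
      [apply Rdiv_lt_0_compat; [apply cond_pos | lra]|].
    destruct (exists_nat_gt (Rmax R0 L0)) as [N0 HN0].
    assert (A1 := Rmax_l R0 L0). assert (A2 := Rmax_r R0 L0).
    exists N0. intros n m Hn Hm.
    assert (Hn' := le_INR _ _ Hn). assert (Hm' := le_INR _ _ Hm).
    assert (B1 := RInt_near_sym (- INR n) (INR n) (INR N0) ltac:(lra) ltac:(lra) ltac:(lra)).
    assert (B2 := RInt_near_sym (- INR m) (INR m) (INR N0) ltac:(lra) ltac:(lra) ltac:(lra)).
    specialize (HL0 (INR N0) ltac:(lra)).
    unfold F. apply Rabs_le_between in B1. apply Rabs_le_between in B2. apply Rabs_def1; lra. }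
  apply ex_lim_seq_cauchy_corr in Hcau. destruct Hcau as [I HI]. exists I.
  intros L HL. destruct (Rle_or_lt (Rabs (RInt g (- L) L - I)) (4 * C * exp (- L / 2))) as [|Hlt]; auto.
  exfalso. set (d := Rabs (RInt g (- L) L - I) - 4 * C * exp (- L / 2)).
  assert (Hd : 0 < d) by (unfold d; lra).
  apply is_lim_seq_spec in HI. destruct (HI (mkposreal d Hd)) as [N0 HN0].
  destruct (exists_nat_gt L) as [m Hm].
  set (m' := Nat.max N0 m).
  specialize (HN0 m' ltac:(unfold m'; lia)). simpl in HN0.
  assert (Hm2 := le_INR _ _ (Nat.le_max_r N0 m)). fold m' in Hm2.
  assert (B := RInt_near_sym (- INR m') (INR m') L HL ltac:(lra) ltac:(lra)).
  assert (Rabs (RInt g (- L) L - I) <= Rabs (F m' - RInt g (- L) L) + Rabs (F m' - I)).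
  { replace (RInt g (- L) L - I) with (- (F m' - RInt g (- L) L) + (F m' - I)) by ring.
    eapply Rle_trans; [apply Rabs_triang | rewrite Rabs_Ropp; lra]. }
  unfold F, d in *. lra.
Qed.

Lemma improper_RInt_exp_tail : exists I,
  is_RInt_gen g (Rbar_locally m_infty) (Rbar_locally p_infty) I /\
  forall L, R0 <= L -> Rabs (RInt g (- L) L - I) <= 4 * C * exp (- L / 2).
Proof.
  destruct sym_RInt_lim as [I HFI]. exists I. split; auto.
  intros P [eps HP].
  destruct (exp_tail_small (8 * C) (eps / 2)) as [L0 HL0]; [apply Rdiv_lt_0_compat; [apply cond_pos | lra]|].
  set (L := Rmax R0 L0). assert (A1 : R0 <= L) by apply Rmax_l. assert (A2 : L0 <= L) by apply Rmax_r.
  specialize (HL0 L A2).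
  apply (Filter_prod _ _ _ (fun x => x < - L) (fun y => L < y)); [exists (- L); auto | exists L; auto|].
  intros x y Hx Hy. exists (RInt g x y). split.
  - apply (RInt_correct (V := R_CompleteNormedModule)). apply Hg.
  - apply HP. change (Rabs (RInt g x y - I) < eps).
    assert (B1 := RInt_near_sym x y L A1 ltac:(lra) ltac:(lra)).
    assert (B2 := HFI L A1).
    replace (RInt g x y - I) with ((RInt g x y - RInt g (- L) L) + (RInt g (- L) L - I)) by ring.
    assert (He := cond_pos eps). eapply Rle_lt_trans; [apply Rabs_triang | lra].
Qed.

End ExpTails.

Lemma RInt_compare_sym (F g : R -> R) a b L C gam : 0 <= L -> a < - L -> L < b -> 0 <= C ->
  ex_RInt F a b -> ex_RInt g (- L) L ->
  (forall x, a < x < b -> L <= Rabs x -> Rabs (F x) <= C * exp (- Rabs x / 2)) ->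
  (forall x, - L <= x <= L -> Rabs (F x - g x) <= gam) ->
  Rabs (RInt F a b - RInt g (- L) L) <= 4 * C * exp (- L / 2) + 2 * L * gam.
Proof.
  intros HL Ha Hb HC Hf Hg Htail Hclose.
  assert (E2 : ex_RInt F (- L) b)
    by (apply (ex_RInt_Chasles_2 (V := R_CompleteNormedModule)) with a; [lra | apply Hf]).
  assert (E1 : ex_RInt F a (- L))
    by (apply (ex_RInt_Chasles_1 (V := R_CompleteNormedModule)) with b; [lra | apply Hf]).
  assert (E3 : ex_RInt F (- L) L)
    by (apply (ex_RInt_Chasles_1 (V := R_CompleteNormedModule)) with b; [lra | apply E2]).
  assert (E4 : ex_RInt F L b)
    by (apply (ex_RInt_Chasles_2 (V := R_CompleteNormedModule)) with (- L); [lra | apply E2]).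
  assert (T1 : Rabs (RInt F a (- L)) <= 2 * C * exp (- L / 2)).
  { apply RInt_tail_left; auto; try lra. intros z Hz. apply Htail; [lra | rewrite Rabs_left; lra]. }
  assert (T2 : Rabs (RInt F L b) <= 2 * C * exp (- L / 2)).
  { apply RInt_tail_right; auto; try lra. intros z Hz. apply Htail; [lra | rewrite Rabs_pos_eq; lra]. }
  assert (T3 : Rabs (RInt F (- L) L - RInt g (- L) L) <= (L - - L) * gam)
    by (apply RInt_diff_le; auto; lra).
  rewrite (RInt_Chasles_R F a (- L) b), (RInt_Chasles_R F (- L) L b) by auto.
  replace (RInt F a (- L) + (RInt F (- L) L + RInt F L b) - RInt g (- L) L) with
    (RInt F a (- L) + RInt F L b + (RInt F (- L) L - RInt g (- L) L)) by ring.
  eapply Rle_trans; [apply Rabs_triang|].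
  eapply Rle_trans; [apply Rplus_le_compat_r, Rabs_triang|].
  lra.
Qed.

(* Dominated convergence on growing intervals, with an exponential dominating function. *)
Lemma RInt_lim_local_unif (f : nat -> R -> R) (a b : nat -> R) (g : R -> R) C R0 I :
  0 <= R0 -> (forall x y, ex_RInt g x y) ->
  (forall n, ex_RInt (f n) (a n) (b n)) ->
  (forall L, R0 <= L -> Rabs (RInt g (- L) L - I) <= 4 * C * exp (- L / 2)) ->
  eventually (fun n => forall x, a n < x < b n -> R0 <= Rabs x ->
                         Rabs (f n x) <= C * exp (- Rabs x / 2)) ->
  (forall L gam, 0 <= L -> 0 < gam -> eventually (fun n => a n < - L /\ L < b n /\
                         forall x, - L <= x <= L -> Rabs (f n x - g x) < gam)) ->
  is_lim_seq (fun n => RInt (f n) (a n) (b n)) I.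
Proof.
  intros HR0 Hg Hf HI Htail Hloc. apply is_lim_seq_spec. intros eps.
  assert (He := cond_pos eps).
  destruct (exp_tail_small (4 * C) (eps / 2)) as [L0 HL0]; [lra|].
  set (L := Rmax R0 L0). assert (A1 : R0 <= L) by apply Rmax_l. assert (A2 : L0 <= L) by apply Rmax_r.
  specialize (HL0 L A2).
  set (gam := eps / (4 * (2 * L + 1))).
  assert (Hgam : 0 < gam) by (unfold gam; apply Rdiv_lt_0_compat; lra).
  assert (H2L : 2 * L * gam < eps / 2).
  { unfold gam. apply Rmult_lt_reg_r with (4 * (2 * L + 1)); [lra|].
    replace (2 * L * (eps / (4 * (2 * L + 1))) * (4 * (2 * L + 1))) with (2 * L * eps) by (field; lra).
    assert (0 <= L * eps) by (apply Rmult_le_pos; lra). lra. }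
  assert (HC : 0 <= C).
  { assert (H := HI L A1). assert (0 < exp (- L / 2)) by apply exp_pos.
    assert (0 <= Rabs (RInt g (- L) L - I)) by apply Rabs_pos. nra. }
  eapply filter_imp; [| apply (filter_and _ _ Htail (Hloc L gam ltac:(lra) Hgam))].
  intros n [Hn [Ha [Hb Hclose]]].
  assert (Hcmp := RInt_compare_sym (f n) g (a n) (b n) L C gam ltac:(lra) Ha Hb HC (Hf n) (Hg _ _)
                    ltac:(intros x Hx HLx; apply Hn; lra)
                    ltac:(intros x Hx; left; apply Hclose; auto)).
  assert (T4 := HI L A1).
  replace (RInt (f n) (a n) (b n) - I) with
    ((RInt (f n) (a n) (b n) - RInt g (- L) L) + (RInt g (- L) L - I)) by ring.
  eapply Rle_lt_trans; [apply Rabs_triang | lra].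
Qed.

(** * The blow-up sequence *)

Lemma abs_lt_of_sq x g : 0 < g -> x ^ 2 < g ^ 2 -> Rabs x < g.
Proof.
  intros Hg H. rewrite <- (pow2_abs x) in H. assert (0 <= Rabs x) by apply Rabs_pos. nra.
Qed.

Lemma sq_weighted_tail p k Ck R0 x y : (forall t, 0 <= t -> t ^ k <= Ck * exp (t / 2)) ->
  R0 <= Rabs x -> 0 <= y <= delta0 p * exp (- (Rabs x - R0) / 2) ->
  Rabs (y ^ 2 * x ^ k) <= delta0 p ^ 2 * exp R0 * Ck * exp (- Rabs x / 2).
Proof.
  intros HCk Hx Hy. rewrite Rabs_mult, <- (RPow_abs x k), (Rabs_pos_eq (y ^ 2)) by apply pow2_ge_0.
  assert (H1 : y ^ 2 <= (delta0 p * exp (- (Rabs x - R0) / 2)) ^ 2) by (apply pow_incr; lra).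
  assert (H2 := HCk (Rabs x) (Rabs_pos x)).
  assert (0 <= Rabs x ^ k) by (apply pow_le, Rabs_pos).
  assert (0 <= y ^ 2) by apply pow2_ge_0.
  apply Rle_trans with ((delta0 p * exp (- (Rabs x - R0) / 2)) ^ 2 * (Ck * exp (Rabs x / 2)));
    [apply Rmult_le_compat; auto|].
  right. simpl. rewrite !Rmult_1_r.
  replace (exp (- Rabs x / 2)) with (exp (- (Rabs x - R0) / 2) * exp (- (Rabs x - R0) / 2)
                                     * exp (Rabs x / 2) * / exp R0).
  - field. apply Rgt_not_eq, exp_pos.
  - rewrite <- !exp_plus, <- exp_Ropp, <- exp_plus. f_equal. field.
Qed.

Lemma sq_weighted_close k L g x y z : 0 <= L -> - L <= x <= L -> 0 < y -> 0 < z ->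
  Rabs (y - z) <= g -> Rabs (y ^ 2 * x ^ k - z ^ 2 * x ^ k) <= g * (y + z) * (L ^ k + 1).
Proof.
  intros HL Hx Hy Hz Hg.
  replace (y ^ 2 * x ^ k - z ^ 2 * x ^ k) with ((y - z) * (y + z) * x ^ k) by ring.
  rewrite !Rabs_mult, (Rabs_pos_eq (y + z)) by lra.
  assert (Hxk : Rabs (x ^ k) <= L ^ k + 1).
  { rewrite <- RPow_abs. assert (Rabs x ^ k <= L ^ k) by (apply pow_incr; split; [apply Rabs_pos | apply Rabs_le; lra]).
    lra. }
  assert (0 <= Rabs (y - z)) by apply Rabs_pos. assert (0 <= Rabs (x ^ k)) by apply Rabs_pos.
  apply Rmult_le_compat; [nra | auto | apply Rmult_le_compat_r; lra | auto].
Qed.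

Section Blowup.
Variables (N : nat) (p : R) (u : R -> R -> R) (rbar : R -> R) (W : R -> R) (lamn : nat -> R).
Hypothesis HN : (2 <= N)%nat.
Hypothesis Hp : 2 < p.
Hypothesis Hsol : forall lam, 0 < lam -> pos_radial_sol N p lam (u lam).
Hypothesis Hmax : forall lam, 0 < lam -> unique_max_point (u lam) (rbar lam).
Hypothesis Hgs : ground_state p W.
Hypothesis Hpos : forall n, 0 < lamn n.
Hypothesis Hlim : is_lim_seq lamn p_infty.

Notation wn n := (rescaled p (lamn n) (rbar (lamn n)) (u (lamn n))).
Notation Mn n := (rescaled p (lamn n) (rbar (lamn n)) (u (lamn n)) 0).
Notation An n := (left_end (lamn n) (rbar (lamn n))).
Notation Bn n := (right_end (lamn n) (rbar (lamn n))).
Notation btn n := (damping_bound N (lamn n)).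
Notation W0 := (W 0).

Lemma sol_n n : pos_radial_sol N p (lamn n) (u (lamn n)).
Proof. apply Hsol, Hpos. Qed.

Lemma max_n n : unique_max_point (u (lamn n)) (rbar (lamn n)).
Proof. apply Hmax, Hpos. Qed.

Lemma W0_pos : 0 < W0.
Proof. apply (gs_bounds p W Hp Hgs 0). Qed.

Lemma Phi_W0 : Phi p W0 = 0.
Proof. apply gs_Phi_max; auto. Qed.

Lemma max_n_ge n : W0 <= Mn n.
Proof. apply (max_ge_zero N p _ _ _ W0 HN Hp (Hpos n) (sol_n n) (max_n n) W0_pos Phi_W0). Qed.

Lemma sqrt_lamn_ge S : eventually (fun n => S <= sqrt (lamn n)).
Proof.
  apply is_lim_seq_spec in Hlim. destruct (Hlim (Rmax S 0 ^ 2)) as [N0 H0].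
  exists N0. intros n Hn. specialize (H0 n Hn).
  apply Rle_trans with (Rmax S 0); [apply Rmax_l|].
  rewrite <- (sqrt_pow2 (Rmax S 0)) by apply Rmax_r. apply sqrt_le_1_alt. lra.
Qed.

Lemma Phi_max_n_lt eta : 0 < eta -> eventually (fun n => Phi p (Mn n) < eta).
Proof.
  intros He. eapply filter_imp; [|apply (sqrt_lamn_ge (sqrt_lam_threshold N p W0 eta))].
  intros n Hn. apply (Phi_max_small N p (lamn n) _ _ W0 HN Hp (Hpos n) (sol_n n) (max_n n)
                        W0_pos Phi_W0 eta He Hn).
Qed.

Lemma max_n_lt xi : 0 < xi -> eventually (fun n => Mn n < W0 + xi).
Proof.
  intros Hxi. assert (Hpp := Phi_pos p W0 Hp W0_pos Phi_W0 (W0 + xi) ltac:(lra)).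
  eapply filter_imp; [|apply (Phi_max_n_lt _ Hpp)]. intros n Hn. cbv beta in Hn |- *.
  destruct (Rlt_or_le (Mn n) (W0 + xi)) as [|Hge]; auto.
  assert (Phi p (W0 + xi) <= Phi p (Mn n)) by (apply (Phi_le p W0 Hp W0_pos Phi_W0); lra). lra.
Qed.

Lemma damping_bound_n_lt g : 0 < g -> eventually (fun n => btn n < g).
Proof.
  intros Hg. eapply filter_imp; [|apply (sqrt_lamn_ge ((INR N - 1) / g + 1))].
  intros n Hn. cbv beta in Hn |- *.
  assert (Hs : 0 < sqrt (lamn n)) by apply sqrt_lt_R0, Hpos. assert (HN1 := INR_N_minus_1 N HN).
  unfold damping_bound. apply Rmult_lt_reg_r with (sqrt (lamn n) / g); [apply Rdiv_lt_0_compat; lra|].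
  replace ((INR N - 1) / sqrt (lamn n) * (sqrt (lamn n) / g)) with ((INR N - 1) / g) by (field; lra).
  replace (g * (sqrt (lamn n) / g)) with (sqrt (lamn n)) by (field; lra). lra.
Qed.

Lemma right_end_n_gt L : eventually (fun n => L < Bn n).
Proof.
  assert (H : 0 < exp (-2 * L) / 2) by (assert (H := exp_pos (-2 * L)); lra).
  eapply filter_imp; [|apply (Phi_max_n_lt _ H)]. intros n Hn.
  apply (right_end_gt N p (lamn n) _ _ W0 HN Hp (Hpos n) (sol_n n) (max_n n) W0_pos Phi_W0 L Hn).
Qed.

(* [e^(2 bt L) - 1] is small once [bt] is, by continuity of [exp] at [0]. *)
Lemma left_end_n_gt L : 0 <= L -> eventually (fun n => L < - An n).
Proof.
  intros HL. set (T := exp (-2 * L)). assert (HT : 0 < T) by apply exp_pos.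
  assert (HW := W0_pos). assert (HW2 : 0 <= W0 ^ 2) by apply pow2_ge_0.
  set (e1 := Rmin 1 (T / (8 * W0 ^ 2 + 1))).
  assert (He1 : 0 < e1) by (apply Rmin_glb_lt; [lra | apply Rdiv_lt_0_compat; lra]).
  assert (He1a : e1 <= 1) by apply Rmin_l.
  assert (He1b : e1 <= T / (8 * W0 ^ 2 + 1)) by apply Rmin_r.
  destruct (continuous_eps exp 0 (is_derive_continuous exp 0 _ (is_derive_exp 0)) e1 He1)
    as [d [Hd Hc]].
  rewrite exp_0 in Hc.
  assert (HT8 : 0 < T / 8) by lra.
  assert (Hg : 0 < d / (2 * L + 1)) by (apply Rdiv_lt_0_compat; lra).
  eapply filter_imp;
    [|apply (filter_and _ _ (filter_and _ _ (Phi_max_n_lt _ HT8) (max_n_lt W0 HW))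
                             (damping_bound_n_lt _ Hg))].
  intros n [[H1 H2] H3]. cbv beta in *.
  apply (left_end_gt N p (lamn n) _ _ W0 HN Hp (Hpos n) (sol_n n) (max_n n) W0_pos Phi_W0 L HL).
  fold T.
  assert (Hb0 := damping_bound_pos N (lamn n) HN (Hpos n)).
  assert (Ht : Rabs (2 * btn n * L - 0) < d).
  { rewrite Rminus_0_r, Rabs_pos_eq by nra.
    apply Rmult_lt_compat_r with (r := 2 * L + 1) in H3; [|lra].
    replace (d / (2 * L + 1) * (2 * L + 1)) with d in H3 by (field; lra). nra. }
  specialize (Hc _ Ht). apply Rabs_def2 in Hc.
  set (e := exp (2 * btn n * L)) in *.
  assert (HE0 := Phi_max_nonneg N p (lamn n) (rbar (lamn n)) (u (lamn n)) HN Hp (Hpos n) (sol_n n) (max_n n)).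
  assert (HM := max_n_ge n).
  assert (He : 1 <= e) by (unfold e; rewrite <- exp_0; destruct (Req_dec L 0) as [->|];
     [rewrite Rmult_0_r; lra | left; apply exp_increasing; nra]).
  assert (HM2 : Mn n ^ 2 <= 4 * W0 ^ 2) by nra.
  assert (Hk : T / (8 * W0 ^ 2 + 1) * (4 * W0 ^ 2) < T / 2).
  { apply Rmult_lt_reg_r with (8 * W0 ^ 2 + 1); [lra|].
    replace (T / (8 * W0 ^ 2 + 1) * (4 * W0 ^ 2) * (8 * W0 ^ 2 + 1)) with (T * (4 * W0 ^ 2)) by (field; lra).
    nra. }
  assert (Mn n ^ 2 * (e - 1) <= 4 * W0 ^ 2 * (T / (8 * W0 ^ 2 + 1))) by (apply Rmult_le_compat; try lra; apply pow2_ge_0).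
  assert (2 * Phi p (Mn n) * e <= 2 * (T / 8) * 2) by nra.
  lra.
Qed.

(* The Gronwall bound of [rescaled_near_ground_state], made small by [M -> W0] and [bt -> 0]. *)
Lemma rescaled_n_close L g : 0 <= L -> 0 < g -> eventually (fun n => L < Bn n /\ L < - An n /\
  forall r, - L <= r <= L -> Rabs (wn n r - W r) < g).
Proof.
  intros HL Hg. assert (HW := W0_pos).
  set (k := gronwall_rate p W0).
  set (th := g ^ 2 * exp (- k * L) / 4).
  assert (Hth : 0 < th) by (unfold th; assert (0 < g ^ 2) by (apply pow_lt; lra);
     assert (0 < exp (- k * L)) by apply exp_pos; nra).
  set (xi := Rmin W0 (sqrt th)).
  assert (Hxi : 0 < xi) by (apply Rmin_glb_lt; auto; apply sqrt_lt_R0; auto).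
  assert (HW4 : 0 < 4 * W0 ^ 2) by (assert (0 < W0 ^ 2) by (apply pow_lt; auto); lra).
  set (gb := Rmin 1 (th / (4 * W0 ^ 2))).
  assert (Hgb : 0 < gb) by (apply Rmin_glb_lt; [lra | apply Rdiv_lt_0_compat; auto]).
  eapply filter_imp;
    [|apply (filter_and _ _ (filter_and _ _ (right_end_n_gt L) (left_end_n_gt L HL))
                             (filter_and _ _ (max_n_lt xi Hxi) (damping_bound_n_lt gb Hgb)))].
  intros n [[H1 H2] [H3 H4]]. split; auto. split; auto. intros r Hr.
  assert (xi <= W0) by apply Rmin_l. assert (xi <= sqrt th) by apply Rmin_r.
  assert (gb <= 1) by apply Rmin_l. assert (gb <= th / (4 * W0 ^ 2)) by apply Rmin_r.
  assert (HM := max_n_ge n).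
  assert (Hc := rescaled_near_ground_state N p (lamn n) (rbar (lamn n)) (u (lamn n)) W0 HN Hp
     (Hpos n) (sol_n n) (max_n n) HW W Hgs eq_refl L HL H1 H2 ltac:(lra) ltac:(lra) r Hr).
  apply abs_lt_of_sq; auto.
  assert (Hs : (Mn n - W0) ^ 2 < th).
  { assert (Hsq : sqrt th * sqrt th = th) by (apply sqrt_sqrt; lra). nra. }
  assert (Hb : btn n * (2 * W0) ^ 2 < th).
  { replace ((2 * W0) ^ 2) with (4 * W0 ^ 2) by ring.
    apply Rmult_lt_reg_r with (/ (4 * W0 ^ 2)); [apply Rinv_0_lt_compat; auto|].
    replace (btn n * (4 * W0 ^ 2) * / (4 * W0 ^ 2)) with (btn n) by (field; lra).
    unfold Rdiv in *. lra. }
  assert (Hex : exp (- k * L) * exp (k * L) = 1).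
  { rewrite <- exp_plus. replace (- k * L + k * L) with 0 by ring. apply exp_0. }
  assert (0 < exp (k * L)) by apply exp_pos.
  assert (((Mn n - W0) ^ 2 + btn n * (2 * W0) ^ 2) * exp (k * L) < 2 * th * exp (k * L))
    by (apply Rmult_lt_compat_r; lra).
  assert (2 * th * exp (k * L) = g ^ 2 / 2).
  { replace (2 * th * exp (k * L)) with (g ^ 2 / 2 * (exp (- k * L) * exp (k * L))) by (unfold th; field).
    rewrite Hex; ring. }
  assert (0 < g ^ 2) by (apply pow_lt; lra).
  fold k in Hc. lra.
Qed.

Section Tails.
Variable R0 : R.
Hypothesis HR01 : 1 <= R0.
Hypothesis HR0W : forall r, R0 <= Rabs r -> W r < delta0 p / 2.

Lemma rescaled_n_tail : eventually (fun n => forall r, An n < r < Bn n -> R0 <= Rabs r ->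
  wn n r <= delta0 p * exp (- (Rabs r - R0) / 2)).
Proof.
  assert (Hd : 0 < delta0 p / 2) by (assert (H := delta0_pos p); lra).
  eapply filter_imp; [|apply (rescaled_n_close R0 (delta0 p / 2) ltac:(lra) Hd)].
  intros n [H1 [H2 H3]].
  apply (rescaled_exp_decay N p (lamn n) _ _ W0 HN Hp (Hpos n) (sol_n n) (max_n n) W0_pos Phi_W0);
    auto; try lra.
  - specialize (H3 R0 ltac:(lra)). apply Rabs_def2 in H3.
    assert (W R0 < delta0 p / 2) by (apply HR0W; rewrite Rabs_pos_eq; lra). lra.
  - specialize (H3 (- R0) ltac:(lra)). apply Rabs_def2 in H3.
    assert (W (- R0) < delta0 p / 2) by (apply HR0W; rewrite Rabs_Ropp, Rabs_pos_eq; lra). lra.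
Qed.

(* The decay bound passes to the locally uniform limit [W]. *)
Lemma ground_state_exp_tail r : R0 <= Rabs r -> W r <= delta0 p * exp (- (Rabs r - R0) / 2).
Proof.
  intros Hr. set (bound := delta0 p * exp (- (Rabs r - R0) / 2)).
  destruct (Rle_or_lt (W r) bound) as [|Hlt]; auto. exfalso.
  destruct (filter_and (F := eventually) _ _
              (rescaled_n_close (Rabs r) (W r - bound) ltac:(apply Rabs_pos) ltac:(lra))
              rescaled_n_tail) as [N0 HN0].
  destruct (HN0 N0 (le_n _)) as [[H1 [H2 H3]] H4].
  assert (Hrr : - Rabs r <= r <= Rabs r) by (apply Rabs_le_between; lra).
  specialize (H3 r Hrr). specialize (H4 r ltac:(lra) Hr).
  apply Rabs_def2 in H3. unfold bound in *. lra.
Qed.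

End Tails.

Lemma weighted_n_close k L gam : 0 <= L -> 0 < gam -> eventually (fun n =>
  An n < - L /\ L < Bn n /\
  forall x, - L <= x <= L -> Rabs (wn n x ^ 2 * x ^ k - W x ^ 2 * x ^ k) < gam).
Proof.
  intros HL Hgam. assert (HW := W0_pos).
  set (g' := gam / (4 * W0 * (L ^ k + 1))).
  assert (HLk : 0 <= L ^ k) by (apply pow_le; lra).
  assert (Hg' : 0 < g') by (unfold g'; apply Rdiv_lt_0_compat; [lra | nra]).
  eapply filter_imp; [|apply (filter_and _ _ (rescaled_n_close L g' HL Hg') (max_n_lt W0 HW))].
  intros n [[H1 [H2 H3]] H4]. split; [lra | split; [lra|]]. intros x Hx.
  assert (Hx' : An n < x < Bn n) by lra.
  destruct (rescaled_ode N p (lamn n) (rbar (lamn n)) (u (lamn n)) Hp (Hpos n) (sol_n n) x Hx')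
    as [_ [_ [Hwpos _]]].
  assert (HwM := rescaled_le_max N p (lamn n) (rbar (lamn n)) (u (lamn n)) Hp (Hpos n)
                   (sol_n n) (max_n n) x Hx').
  destruct (gs_bounds p W Hp Hgs x) as [[HWx HWm] _].
  eapply Rle_lt_trans; [apply (sq_weighted_close k L g'); auto; left; apply H3; auto|].
  apply Rle_lt_trans with (g' * (3 * W0) * (L ^ k + 1)).
  - apply Rmult_le_compat_r; [lra|]. apply Rmult_le_compat_l; lra.
  - replace (g' * (3 * W0) * (L ^ k + 1)) with (3 / 4 * gam) by (unfold g'; field; nra). lra.
Qed.

Lemma weighted_mass_lim k : exists I : R,
  is_RInt_gen (fun r => W r ^ 2 * r ^ k) (Rbar_locally m_infty) (Rbar_locally p_infty) I /\
  is_lim_seq (fun n => RInt (fun r => wn n r ^ 2 * r ^ k) (An n) (Bn n)) I.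
Proof.
  destruct (gs_tail_small p W Hgs (delta0 p / 2)) as [R0' HR0'];
    [assert (H := delta0_pos p); lra|].
  set (R0 := Rmax 1 R0'). assert (HR01 : 1 <= R0) by apply Rmax_l.
  assert (HR0W : forall r, R0 <= Rabs r -> W r < delta0 p / 2).
  { intros r Hr. apply HR0'. assert (R0' <= R0) by apply Rmax_r. lra. }
  destruct (pow_le_exp_half k) as [Ck [HCk HCkb]].
  set (C := delta0 p ^ 2 * exp R0 * Ck).
  set (g := fun r => W r ^ 2 * r ^ k).
  assert (Hgex : forall a b, ex_RInt g a b).
  { intros a b. apply (ex_RInt_continuous (V := R_CompleteNormedModule)). intros z _. unfold g.
    apply continuous_Rmult; [|apply continuous_Rpow, (continuous_id (U := R_UniformSpace))].
    apply continuous_Rpow. destruct Hgs as [_ [_ [Hode _]]].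
    destruct (Hode z) as [A _]. apply (is_derive_continuous _ _ _ A). }
  assert (Hgt : forall x, R0 <= Rabs x -> Rabs (g x) <= C * exp (- Rabs x / 2)).
  { intros x Hx. apply sq_weighted_tail; auto. destruct Hgs as [Hpw _]. split.
    - left; apply Hpw.
    - apply (ground_state_exp_tail R0 HR01 HR0W x Hx). }
  destruct (improper_RInt_exp_tail g C R0 ltac:(lra) Hgex Hgt) as [I [HIgen HI]].
  exists I. split; [exact HIgen|].
  apply (RInt_lim_local_unif _ _ _ g C R0 I ltac:(lra) Hgex); auto.
  - intros n. apply (ex_RInt_rescaled N p (lamn n) (rbar (lamn n)) (u (lamn n)) (Hpos n) (sol_n n) (max_n n)).
  - eapply filter_imp; [|apply (rescaled_n_tail R0 HR01 HR0W)].
    intros n Hn x Hx HRx. apply sq_weighted_tail; auto. split; [|apply Hn; auto].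
    left. apply (rescaled_ode N p (lamn n) (rbar (lamn n)) (u (lamn n)) Hp (Hpos n) (sol_n n) x Hx).
  - intros L gam HL Hgam. apply weighted_n_close; auto.
Qed.

End Blowup.

Theorem corollary2p6 (N : nat) (p : R) (u : R -> R -> R) (rbar : R -> R)
  (W : R -> R) (lamn : nat -> R) :
  (2 <= N)%nat ->
  subcritical N p ->
  (forall lam, 0 < lam -> pos_radial_sol N p lam (u lam)) ->
  (forall lam, 0 < lam -> unique_max_point (u lam) (rbar lam)) ->
  ground_state p W ->
  (forall n, 0 < lamn n) ->
  is_lim_seq lamn p_infty ->
  exists phi : nat -> nat,
    (forall n, (phi n < phi (S n))%nat) /\
    forall k : nat, (k < N)%nat ->
      exists I : R,
        is_RInt_gen (fun r => (W r) ^ 2 * r ^ k)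
          (Rbar_locally m_infty) (Rbar_locally p_infty) I /\
        is_lim_seq
          (fun n =>
             let lam := lamn (phi n) in
             let rb := rbar lam in
             RInt (fun r => (rescaled p lam rb (u lam) r) ^ 2 * r ^ k)
                  (sqrt lam * (1 - rb)) (sqrt lam * (2 - rb)))
          (Finite I).
Proof.
  intros HN [Hp _] Hsol Hmax Hgs Hpos Hlim.
  exists (fun n => n). split; [intros n; lia|].
  intros k _.
  exact (weighted_mass_lim N p u rbar W lamn HN Hp Hsol Hmax Hgs Hpos Hlim k).
Qed.
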